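(* Suppose the SV parameters ensure spectral decay with some exponent $\nu\in[0,2]$, with times $t_N^*$. Then there exist constants $C,C'>0$, depending on $u_0$ but not on $N$ or $t$, such that for all $t\ge t_N^*$ and all $1\le p<\infty$: \[ \|(I-P_N)(u_N(t)\cdot\nabla\omega_N(t))\|_{L^p}\le CN^{-1}\|\omega_N(t)\|_{L^p} \quad\text{and}\quad \|(I-P_N)(u_N(t)\cdot\nabla\omega_N(t))\|_{L^p}\le C'N^{-1}. \]
   Context: Let $\mathbb{T}^2=\mathbb{R}^2/(2\pi\mathbb{Z})^2$. For $k=(k_1,k_2)\in\mathbb{Z}^2$ let $|k|$ denote the Euclidean norm and $|k|_\infty=\max(|k_1|,|k_2|)$. Fourier coefficients are $\hat f_k=(2\pi)^{-2}\int_{\mathbb{T}^2}f(x)e^{-ik\cdot x}\,dx$. $P_Nf:=\sum_{|k|_\infty\le N}\hat f_k e^{ik\cdot x}$. Convolution is $(K*f)(x)=\int_{\mathbb{T}^2}K(x-y)f(y)\,dy$, so $\widehat{(K*f)}_k=\widetilde K_k\hat f_k$ with $\widetilde K_k:=\int_{\mathbb{T}^2}K(x)e^{-ik\cdot x}dx$. For $v=(v^1,v^2)$, $\mathrm{curl}\,v=\partial_1v^2-\partial_2v^1$. Initial data: $u_0\in L^2(\mathbb{T}^2;\mathbb{R}^2)$ with $\operatorname{div}u_0=0$ in distributions and $\int u_0\,dx=0$; $\omega_0:=\mathrm{curl}\,u_0\in H^{-1}(\mathbb{T}^2)$. SV scheme: for integers $N\ge2$ fix parameters $\epsilon_N>0$,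 $m_N\ge0$, $1\le a_N\le N$, and: numbers $\hat R_k\in[0,1]$ with $\hat R_k=1$ for $|k|\le m_N$, $\hat R_k=0$ for $|k|>2m_N$; $R_{m_N}$ is the trigonometric polynomial with $\widetilde{(R_{m_N})}_k=\hat R_k$, and $Q_N$ is the Fourier multiplier with symbol $\hat Q_k:=1-\hat R_k$; it is assumed $\|R_{m_N}\|_{L^1}\le C\log(N)^2$ with $C$ independent of $N$; $K_{a_N}$ is a trigonometric polynomial with $\widetilde{(K_{a_N})}_k=0$ unless $|k|_\infty\le a_N$, $|\widetilde{(K_{a_N})}_k|\le1$, and $\|K_{a_N}\|_{L^1}\le C\log(N)^2$. The SV approximation is the trigonometric polynomial field $u_N(x,t)=\sum_{0<|k|_\infty\le N}\hat u_k(t)e^{ik\cdot x}$, $k\cdot\hat u_k=0$, solving $\partial_tu_N+P_N(u_N\cdot\nabla u_N)+\nabla p_N=\epsilon_N\Delta(Q_Nu_N)$, $\operatorname{div}u_N=0$, $u_N(\cdot,0)=K_{a_N}*u_0$. Its vorticity $\omega_N:=\mathrm{curl}\,u_N$ solves $\partial_t\omega_N+P_N(u_N\cdot\nabla\omega_N)=\epsilon_N\Delta(Q_N\omega_N)$, $\omega_N(\cdot,0)=K_{a_N}*\omega_0$; $\hat\omega_k(t)$ denotes its Fourier coefficients. Spectral decay: for $\nu\in[0,2]$, the parameter choice ensures spectral decay with exponent $\nu$ if $\epsilon_N\to0$, $\epsilon_Nm_N^2\log(N)^2\to0$, and there are times $t_N^*>0$ with $t_N^*\,a_N^{\nu/2}N\log(N)^2\to0$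 as $N\to\infty$ such that for every $\sigma>0$ there is $C_\sigma$ (independent of $N$ and $t$) with $|\hat\omega_k(t)|\le C_\sigma N^{-\sigma}$ for all $N$, all $t\ge t_N^*$ and all $k$ with $|k|\ge N/2$. *)

From Stdlib Require Import Reals Lra ZArith List ClassicalEpsilon.
Open Scope R_scope.

Definition Cx : Type := (R * R)%type.
Definition C0 : Cx := (0, 0).
Definition Ci : Cx := (0, 1).
Definition Cadd (z w : Cx) : Cx := (fst z + fst w, snd z + snd w).
Definition Copp (z : Cx) : Cx := (- fst z, - snd z).
Definition Csub (z w : Cx) : Cx := Cadd z (Copp w).
Definition Cmul (z w : Cx) : Cx :=
  (fst z * fst w - snd z * snd w, fst z * snd w + snd z * fst w).
Definition Cscale (r : R) (z : Cx) : Cx := (r * fst z, r * snd z).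
Definition Cconj (z : Cx) : Cx := (fst z, - snd z).
Definition Cmod (z : Cx) : R := sqrt (fst z ^ 2 + snd z ^ 2).
Definition Cexpi (th : R) : Cx := (cos th, sin th).

Definition Z2 : Type := (Z * Z)%type.
Definition kinf (k : Z2) : Z := Z.max (Z.abs (fst k)) (Z.abs (snd k)).
Definition knorm2 (k : Z2) : R := IZR (fst k * fst k + snd k * snd k)%Z.
Definition knorm (k : Z2) : R := sqrt (knorm2 k).
Definition kneg (k : Z2) : Z2 := (- fst k, - snd k)%Z.
Definition ksub (k j : Z2) : Z2 := (fst k - fst j, snd k - snd j)%Z.
Definition k0 : Z2 := (0, 0)%Z.

Definition zrange (M : nat) : list Z :=
  map (fun i => (Z.of_nat i - Z.of_nat M)%Z) (seq 0 (2 * M + 1)).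
Definition box (M : nat) : list Z2 := list_prod (zrange M) (zrange M).

Definition Csum {A : Type} (l : list A) (f : A -> Cx) : Cx :=
  fold_right (fun a acc => Cadd (f a) acc) C0 l.
Definition Rsum {A : Type} (l : list A) (f : A -> R) : R :=
  fold_right (fun a acc => f a + acc) 0 l.

Definition trig_eval (M : nat) (c : Z2 -> Cx) (x1 x2 : R) : Cx :=
  Csum (box M) (fun k => Cmul (c k) (Cexpi (IZR (fst k) * x1 + IZR (snd k) * x2))).

(* ---------- integration over T^2 = [0,2pi)^2 (Lebesgue measure dx) ----------
   For continuous g (all integrands below are continuous), the integral is the
   limit of the uniform-grid Riemann sums; we define it as that limit. *)
Definition riemann_T2 (g : R -> R -> R) (n : nat) : R :=
  (2 * PI / INR (S n)) ^ 2 *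
  sum_f_R0 (fun a => sum_f_R0 (fun b =>
     g (2 * PI * INR a / INR (S n)) (2 * PI * INR b / INR (S n))) n) n.
Definition int_T2 (g : R -> R -> R) : R :=
  epsilon (inhabits 0) (fun I => Un_cv (riemann_T2 g) I).

(* x^p for x >= 0, p > 0 (with 0^p = 0) *)
Definition rpow (x p : R) : R := if Rle_dec x 0 then 0 else Rpower x p.

Definition Lp_norm (p : R) (f : R -> R -> Cx) : R :=
  rpow (int_T2 (fun x1 x2 => rpow (Cmod (f x1 x2)) p)) (1 / p).

(* ---------- Fourier-side quantities of a velocity field ----------
   v : Z2 -> Cx * Cx are the Fourier coefficients (hat u^1_k, hat u^2_k). *)
Definition VField : Type := Z2 -> (Cx * Cx).

(* vorticity coefficient: curl v = d1 v^2 - d2 v^1 *)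
Definition omhat (v : VField) (k : Z2) : Cx :=
  Cmul Ci (Csub (Cscale (IZR (fst k)) (snd (v k))) (Cscale (IZR (snd k)) (fst (v k)))).

Definition adv (v : VField) (j l : Z2) : Cx :=
  Cmul Ci (Cadd (Cscale (IZR (fst l)) (fst (v j))) (Cscale (IZR (snd l)) (snd (v j)))).

(* Fourier coefficient at k of (v . grad omega), v supported in box N *)
Definition NLw (N : nat) (v : VField) (k : Z2) : Cx :=
  Csum (box N) (fun j => Cmul (adv v j (ksub k j)) (omhat v (ksub k j))).

(* Fourier coefficient at k of (v . grad v), v supported in box N *)
Definition NLu (N : nat) (v : VField) (k : Z2) : Cx * Cx :=
  (Csum (box N) (fun j => Cmul (adv v j (ksub k j)) (fst (v (ksub k j)))),
   Csum (box N) (fun j => Cmul (adv v j (ksub k j)) (snd (v (ksub k j))))).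

Definition vort_fun (N : nat) (v : VField) : R -> R -> Cx :=
  trig_eval N (omhat v).

(* (I - P_N)(v . grad omega) as a function on T^2 (the product has degree <= 2N) *)
Definition high_nl_fun (N : nat) (v : VField) : R -> R -> Cx :=
  trig_eval (2 * N)
    (fun k => if (kinf k <=? Z.of_nat N)%Z then C0 else NLw N v k).

Definition Cderiv (f : R -> Cx) (t : R) (d : Cx) : Prop :=
  derivable_pt_lim (fun s => fst (f s)) t (fst d) /\
  derivable_pt_lim (fun s => snd (f s)) t (snd d).

Definition Cright_cont0 (f : R -> Cx) : Prop :=
  forall eps, eps > 0 -> exists delta, delta > 0 /\
    forall s, 0 <= s < delta -> Cmod (Csub (f s) (f 0)) < eps.

From Stdlib Require Import Reals Lra Lia ZArith List ClassicalEpsilon Classical.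
Open Scope R_scope.

(* Write v for the velocity coefficients of u_N(t).  The modes of (I - P_N)(v . grad w)
   have |k|_inf > N, and each is a sum over pairs of modes (j, k - j) of the box, one of
   which has |.|_inf >= N/2; spectral decay with sigma = 7 makes that factor O(N^-7),
   while the gradient and the number of pairs and of output modes contribute O(N^5).
   Hence (I - P_N)(v . grad w) = O(N^-2) sup_l |w_l| pointwise, and so in L^p.
   Two bounds on sup_l |w_l| finish the proof: every Fourier coefficient of a
   trigonometric polynomial is bounded by its L^p norm (discrete orthogonality on a fine
   grid together with Jensen's inequality on the Riemann sums defining the integral), and
   the energy sum_k |v_k|^2 never exceeds that of u_0, because the nonlinear term
   conserves energy and the spectral viscosity dissipates it, so |w_l| <= 2 N ||u_0||. *)

Ltac cx_ring :=
  repeat match goal with z : Cx |- _ => destruct z end;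
  unfold Csub, Cadd, Cmul, Copp, Cscale, Cconj, C0, Ci in *; simpl in *;
  f_equal; ring.

Lemma Cadd_0_l z : Cadd C0 z = z. Proof. cx_ring. Qed.
Lemma Cadd_0_r z : Cadd z C0 = z. Proof. cx_ring. Qed.
Lemma Cadd_comm z w : Cadd z w = Cadd w z. Proof. cx_ring. Qed.
Lemma Cadd_assoc z w u : Cadd z (Cadd w u) = Cadd (Cadd z w) u. Proof. cx_ring. Qed.
Lemma Cmul_0_r z : Cmul z C0 = C0. Proof. cx_ring. Qed.

Lemma Cexpi_add a b : Cmul (Cexpi a) (Cexpi b) = Cexpi (a + b).
Proof. unfold Cexpi, Cmul; cbn [fst snd]. rewrite cos_plus, sin_plus. f_equal; ring. Qed.

Lemma Cmod_ge0 z : 0 <= Cmod z.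
Proof. apply sqrt_pos. Qed.

Lemma Cmod_sq z : Cmod z ^ 2 = fst z ^ 2 + snd z ^ 2.
Proof. unfold Cmod. rewrite pow2_sqrt; nra. Qed.

Lemma Cmod_fst z : Rabs (fst z) <= Cmod z.
Proof. unfold Cmod. rewrite <- sqrt_Rsqr_abs. apply sqrt_le_1_alt. unfold Rsqr. nra. Qed.

Lemma Cmod_snd z : Rabs (snd z) <= Cmod z.
Proof. unfold Cmod. rewrite <- sqrt_Rsqr_abs. apply sqrt_le_1_alt. unfold Rsqr. nra. Qed.

Lemma Cmod_le_Rabs_sum z : Cmod z <= Rabs (fst z) + Rabs (snd z).
Proof.
  pose proof (Rabs_pos (fst z)); pose proof (Rabs_pos (snd z)).
  unfold Cmod. rewrite <- (sqrt_square (Rabs (fst z) + Rabs (snd z))) by lra.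
  apply sqrt_le_1_alt. rewrite <- (pow2_abs (fst z)), <- (pow2_abs (snd z)). nra.
Qed.

Lemma Cmod_C0 : Cmod C0 = 0.
Proof. unfold Cmod, C0; cbn [fst snd]. replace (0 ^ 2 + 0 ^ 2) with 0 by ring. apply sqrt_0. Qed.

Lemma Cmod_mul z w : Cmod (Cmul z w) = Cmod z * Cmod w.
Proof.
  unfold Cmod. rewrite <- sqrt_mult by nra. f_equal.
  destruct z, w; unfold Cmul; simpl. ring.
Qed.

Lemma Cmod_scale r z : Cmod (Cscale r z) = Rabs r * Cmod z.
Proof.
  unfold Cmod. rewrite <- sqrt_Rsqr_abs, <- sqrt_mult by (unfold Rsqr; nra). f_equal.
  destruct z; unfold Cscale, Rsqr; simpl. ring.
Qed.

Lemma Cmod_opp z : Cmod (Copp z) = Cmod z.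
Proof. unfold Cmod. destruct z; simpl. f_equal; ring. Qed.

Lemma Cmod_Ci_mul z : Cmod (Cmul Ci z) = Cmod z.
Proof.
  rewrite Cmod_mul. unfold Cmod at 1, Ci; cbn [fst snd].
  replace (0 ^ 2 + 1 ^ 2) with 1 by ring. rewrite sqrt_1; ring.
Qed.

Lemma Cmod_Cexpi th : Cmod (Cexpi th) = 1.
Proof.
  unfold Cmod, Cexpi; cbn [fst snd]. rewrite <- sqrt_1. f_equal.
  pose proof (sin2_cos2 th). unfold Rsqr in *. nra.
Qed.

Lemma Cmod_add z w : Cmod (Cadd z w) <= Cmod z + Cmod w.
Proof.
  pose proof (Cmod_ge0 z); pose proof (Cmod_ge0 w).
  unfold Cmod at 1. rewrite <- (sqrt_square (Cmod z + Cmod w)) by lra.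
  apply sqrt_le_1_alt.
  assert (Hz := Cmod_sq z). assert (Hw := Cmod_sq w).
  destruct z as [a b], w as [c d]; unfold Cadd in *; cbn [fst snd] in *.
  (* Cauchy-Schwarz *)
  assert (a * c + b * d <= Cmod (a, b) * Cmod (c, d)).
  { destruct (Rle_dec (a * c + b * d) 0); [nra|].
    apply Rsqr_incr_0_var; [|nra]. unfold Rsqr.
    pose proof (pow2_ge_0 (a * d - b * c)). nra. }
  nra.
Qed.

Lemma Cmod_sub z w : Cmod (Csub z w) <= Cmod z + Cmod w.
Proof. unfold Csub. rewrite <- (Cmod_opp w). apply Cmod_add. Qed.

Lemma Cmod_triang_inv z w : Rabs (Cmod z - Cmod w) <= Cmod (Csub z w).
Proof.
  assert (Cmod z <= Cmod (Csub z w) + Cmod w).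
  { replace z with (Cadd (Csub z w) w) at 1 by cx_ring. apply Cmod_add. }
  assert (Cmod w <= Cmod (Csub z w) + Cmod z).
  { replace w with (Cadd (Copp (Csub z w)) z) at 1 by cx_ring.
    rewrite <- (Cmod_opp (Csub z w)). apply Cmod_add. }
  apply Rabs_le. lra.
Qed.

Lemma Csum_app {A} (l1 l2 : list A) f :
  Csum (l1 ++ l2) f = Cadd (Csum l1 f) (Csum l2 f).
Proof. induction l1; simpl. - now rewrite Cadd_0_l. - now rewrite IHl1, Cadd_assoc. Qed.

Lemma Csum_ext {A} (l : list A) f g :
  (forall x, In x l -> f x = g x) -> Csum l f = Csum l g.
Proof. induction l; simpl; intros H; auto. rewrite H, IHl; auto. Qed.

Lemma Csum_add {A} (l : list A) f g :
  Csum l (fun x => Cadd (f x) (g x)) = Cadd (Csum l f) (Csum l g).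
Proof. induction l; simpl. - cx_ring. - rewrite IHl. cx_ring. Qed.

Lemma Csum_sub {A} (l : list A) f g :
  Csum l (fun x => Csub (f x) (g x)) = Csub (Csum l f) (Csum l g).
Proof. induction l; simpl. - cx_ring. - rewrite IHl. cx_ring. Qed.

Lemma Csum_opp {A} (l : list A) f : Csum l (fun x => Copp (f x)) = Copp (Csum l f).
Proof. induction l; simpl. - cx_ring. - rewrite IHl. cx_ring. Qed.

Lemma Csum_mul_l {A} (l : list A) c f :
  Cmul c (Csum l f) = Csum l (fun x => Cmul c (f x)).
Proof. induction l; simpl. - cx_ring. - rewrite <- IHl. cx_ring. Qed.

Lemma Csum_mul_r {A} (l : list A) c f :
  Cmul (Csum l f) c = Csum l (fun x => Cmul (f x) c).
Proof. induction l; simpl. - cx_ring. - rewrite <- IHl. cx_ring. Qed.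

Lemma Csum_mul_Csum {A B} (l1 : list A) (l2 : list B) f g :
  Csum l1 (fun a => Csum l2 (fun b => Cmul (f a) (g b))) = Cmul (Csum l1 f) (Csum l2 g).
Proof.
  rewrite Csum_mul_r. apply Csum_ext. intros a _. now rewrite Csum_mul_l.
Qed.

Lemma Csum_zero {A} (l : list A) f : (forall x, In x l -> f x = C0) -> Csum l f = C0.
Proof. induction l; simpl; intros H; auto. rewrite H, IHl by auto. cx_ring. Qed.

Lemma Csum_swap {A B} (l1 : list A) (l2 : list B) g :
  Csum l1 (fun a => Csum l2 (fun b => g a b)) = Csum l2 (fun b => Csum l1 (fun a => g a b)).
Proof.
  induction l1; simpl.
  - symmetry; now apply Csum_zero.
  - now rewrite IHl1, <- Csum_add.
Qed.

Lemma Csum_map {A B} (l : list A) (h : A -> B) f :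
  Csum (map h l) f = Csum l (fun x => f (h x)).
Proof. induction l; simpl; auto. now rewrite IHl. Qed.

Lemma fst_Csum {A} (l : list A) f : fst (Csum l f) = Rsum l (fun x => fst (f x)).
Proof. induction l; simpl; auto. now rewrite <- IHl. Qed.

Lemma Csum_support {A} (l1 l2 : list A) f : NoDup l1 -> NoDup l2 ->
  (forall x, f x <> C0 -> (In x l1 <-> In x l2)) -> Csum l1 f = Csum l2 f.
Proof.
  revert l2; induction l1 as [|a l1 IH]; intros l2 N1 N2 H; simpl.
  - symmetry; apply Csum_zero. intros x Hx.
    destruct (classic (f x = C0)) as [|Hfx]; auto. now apply H in Hx.
  - inversion N1; subst. destruct (classic (f a = C0)) as [E|E].
    + rewrite E, Cadd_0_l. apply IH; auto. intros x Hx. rewrite <- H by auto.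
      split; [simpl; auto|]. intros [->|]; auto. congruence.
    + assert (Ha : In a l2) by (apply H; simpl; auto).
      destruct (in_split _ _ Ha) as [l2a [l2b ->]].
      apply NoDup_remove in N2. destruct N2 as [N2 Nn].
      rewrite Csum_app. simpl. rewrite (IH (l2a ++ l2b)); auto.
      * rewrite Csum_app, !Cadd_assoc, (Cadd_comm (f a)). auto.
      * intros x Hx. specialize (H x Hx). simpl in H. rewrite !in_app_iff in *. simpl in H.
        split; intro K.
        -- assert (x <> a) by (intro; subst; contradiction).
           destruct (proj1 H (or_intror K)) as [|[|]]; auto. congruence.
        -- assert (x <> a) by (intro; subst; tauto).
           destruct (proj2 H ltac:(tauto)); auto. congruence.
Qed.

Lemma Csum_single {A} (l : list A) k f : NoDup l -> In k l ->
  (forall x, In x l -> x <> k -> f x = C0) -> Csum l f = f k.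
Proof.
  intros N Hk H. rewrite (Csum_support l (k :: nil)); auto.
  - simpl; apply Cadd_0_r.
  - repeat constructor; auto.
  - intros x Hx. simpl. split.
    + intros Hl. left. destruct (classic (k = x)); auto. exfalso; apply Hx, H; auto.
    + intros [<-|[]]; auto.
Qed.

Lemma NoDup_map_inj {A B} (h : A -> B) l :
  (forall x y, h x = h y -> x = y) -> NoDup l -> NoDup (map h l).
Proof.
  intros Hi; induction 1; simpl; constructor; auto.
  rewrite in_map_iff. intros [y [E Hy]]. apply Hi in E; subst; auto.
Qed.

Lemma Csum_involution {A} (l : list A) (phi : A -> A) f : NoDup l ->
  (forall x, phi (phi x) = x) ->
  (forall x, f x <> C0 -> In x l) -> (forall x, f (phi x) <> C0 -> In x l) ->
  Csum l (fun x => f (phi x)) = Csum l f.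
Proof.
  intros N Hp H1 H2. rewrite <- Csum_map. apply Csum_support; auto.
  - apply NoDup_map_inj; auto. intros x y E. now rewrite <- (Hp x), E, Hp.
  - intros x Hx. rewrite in_map_iff. split.
    + intros [y [<- Hy]]. auto.
    + intros _. exists (phi x); split; auto. apply H2. now rewrite Hp.
Qed.

Lemma Rsum_app {A} (l1 l2 : list A) f : Rsum (l1 ++ l2) f = Rsum l1 f + Rsum l2 f.
Proof. induction l1; simpl. - ring. - rewrite IHl1; ring. Qed.

Lemma Rsum_ext {A} (l : list A) f g :
  (forall x, In x l -> f x = g x) -> Rsum l f = Rsum l g.
Proof. induction l; simpl; intros H; auto. rewrite H, IHl; auto. Qed.

Lemma Rsum_le {A} (l : list A) f g :
  (forall x, In x l -> f x <= g x) -> Rsum l f <= Rsum l g.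
Proof.
  induction l; simpl; intros H; [lra|].
  pose proof (H a (or_introl eq_refl)). pose proof (IHl (fun x Hx => H x (or_intror Hx))). lra.
Qed.

Lemma Rsum_const {A} (l : list A) c : Rsum l (fun _ => c) = INR (length l) * c.
Proof. induction l; simpl length. - simpl; ring. - rewrite S_INR. simpl. rewrite IHl. ring. Qed.

Lemma Rsum_nonneg {A} (l : list A) f : (forall x, In x l -> 0 <= f x) -> 0 <= Rsum l f.
Proof.
  intros H. apply Rle_trans with (Rsum l (fun _ => 0)).
  - rewrite Rsum_const; lra.
  - now apply Rsum_le.
Qed.

Lemma Rsum_add {A} (l : list A) f g : Rsum l (fun x => f x + g x) = Rsum l f + Rsum l g.
Proof. induction l; simpl. - ring. - rewrite IHl; ring. Qed.

Lemma Rsum_scal {A} (l : list A) c f : Rsum l (fun x => c * f x) = c * Rsum l f.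
Proof. induction l; simpl. - ring. - rewrite IHl; ring. Qed.

Lemma Rsum_term_le {A} (l : list A) f a :
  (forall x, In x l -> 0 <= f x) -> In a l -> f a <= Rsum l f.
Proof.
  induction l; simpl; intros H Ha; [destruct Ha|].
  pose proof (H a0 (or_introl eq_refl)).
  pose proof (Rsum_nonneg l f (fun x Hx => H x (or_intror Hx))).
  destruct Ha as [->|Ha]; [lra|].
  pose proof (IHl (fun x Hx => H x (or_intror Hx)) Ha). lra.
Qed.

Lemma Rsum_list_prod {A B} (l1 : list A) (l2 : list B) F :
  Rsum (list_prod l1 l2) (fun ab => F (fst ab) (snd ab)) =
  Rsum l1 (fun a => Rsum l2 (fun b => F a b)).
Proof.
  induction l1; simpl; auto. rewrite Rsum_app, IHl1. f_equal.
  clear IHl1. induction l2; simpl; auto. now rewrite IHl2.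
Qed.

Lemma Cmod_Csum {A} (l : list A) f : Cmod (Csum l f) <= Rsum l (fun x => Cmod (f x)).
Proof.
  induction l; simpl. - rewrite Cmod_C0; lra.
  - eapply Rle_trans; [apply Cmod_add|]. lra.
Qed.

Lemma Cmod_Csum_le {A} (l : list A) f c : (forall x, In x l -> Cmod (f x) <= c) ->
  Cmod (Csum l f) <= INR (length l) * c.
Proof.
  intros H. eapply Rle_trans; [apply Cmod_Csum|].
  rewrite <- Rsum_const. now apply Rsum_le.
Qed.

Lemma In_zrange M x : In x (zrange M) <-> (- Z.of_nat M <= x <= Z.of_nat M)%Z.
Proof.
  unfold zrange. rewrite in_map_iff. split.
  - intros [i [<- Hi]]. rewrite in_seq in Hi. lia.
  - intros H. exists (Z.to_nat (x + Z.of_nat M)). split; [lia|]. rewrite in_seq. lia.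
Qed.

Lemma NoDup_zrange M : NoDup (zrange M).
Proof. apply NoDup_map_inj; [intros; lia|apply seq_NoDup]. Qed.

Lemma NoDup_list_prod {A B} (l : list A) (l' : list B) :
  NoDup l -> NoDup l' -> NoDup (list_prod l l').
Proof.
  intros N N'. induction N; simpl; [constructor|].
  apply NoDup_app; auto.
  - apply NoDup_map_inj; auto. intros u v E; now inversion E.
  - intros [a b] H1 H2. rewrite in_map_iff in H1. destruct H1 as [y [E _]].
    inversion E; subst. rewrite in_prod_iff in H2. tauto.
Qed.

Lemma In_box M k : In k (box M) <-> (kinf k <= Z.of_nat M)%Z.
Proof.
  destruct k as [k1 k2].
  change (In (k1, k2) (list_prod (zrange M) (zrange M)) <-> (kinf (k1, k2) <= Z.of_nat M)%Z).
  rewrite in_prod_iff, !In_zrange.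
  unfold kinf; simpl. lia.
Qed.

Lemma NoDup_box M : NoDup (box M).
Proof. apply NoDup_list_prod; apply NoDup_zrange. Qed.

Lemma length_box M : INR (length (box M)) = (2 * INR M + 1) ^ 2.
Proof.
  change (INR (length (list_prod (zrange M) (zrange M))) = (2 * INR M + 1) ^ 2).
  unfold zrange. rewrite length_prod, length_map, length_seq.
  rewrite mult_INR, plus_INR, mult_INR. simpl. ring.
Qed.

Lemma kinf_le_knorm k : IZR (kinf k) <= knorm k.
Proof.
  destruct k as [a b]. unfold knorm, knorm2, kinf. simpl.
  rewrite <- (sqrt_square (IZR (Z.max (Z.abs a) (Z.abs b)))) by (apply IZR_le; lia).
  apply sqrt_le_1_alt. rewrite <- mult_IZR. apply IZR_le.
  destruct (Z.max_spec (Z.abs a) (Z.abs b)) as [[_ ->]|[_ ->]]; nia.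
Qed.

Lemma knorm2_ge0 k : 0 <= knorm2 k.
Proof. destruct k as [a b]; unfold knorm2; simpl. apply IZR_le. nia. Qed.

Lemma knorm2_ge1 k : k <> k0 -> 1 <= knorm2 k.
Proof.
  destruct k as [a b]; unfold knorm2, k0; simpl; intros H. apply IZR_le.
  destruct (Z.eq_dec a 0), (Z.eq_dec b 0); subst; try congruence; nia.
Qed.

Lemma Rabs_fst_le_kinf k : Rabs (IZR (fst k)) <= IZR (kinf k).
Proof. rewrite <- abs_IZR. apply IZR_le. unfold kinf; lia. Qed.

Lemma Rabs_snd_le_kinf k : Rabs (IZR (snd k)) <= IZR (kinf k).
Proof. rewrite <- abs_IZR. apply IZR_le. unfold kinf; lia. Qed.

Lemma kinf_ksub k j : (kinf k <= kinf j + kinf (ksub k j))%Z.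
Proof. destruct k, j; unfold kinf, ksub; simpl. lia. Qed.

Lemma kinf_kneg k : kinf (kneg k) = kinf k.
Proof. destruct k; unfold kinf, kneg; simpl. lia. Qed.

(** * Pointwise size of the high-mode nonlinearity *)

Definition divfree (v : VField) : Prop := forall k,
  Cadd (Cscale (IZR (fst k)) (fst (v k))) (Cscale (IZR (snd k)) (snd (v k))) = C0.

Lemma Cmod_omhat_sq v j :
  Cadd (Cscale (IZR (fst j)) (fst (v j))) (Cscale (IZR (snd j)) (snd (v j))) = C0 ->
  Cmod (omhat v j) ^ 2 = knorm2 j * (Cmod (fst (v j)) ^ 2 + Cmod (snd (v j)) ^ 2).
Proof.
  unfold omhat, knorm2. rewrite plus_IZR, !mult_IZR, !Cmod_sq.
  destruct (v j) as [[a b] [c d]], j as [p q].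
  unfold Cadd, Cscale, Cmul, Csub, Copp, Ci, C0; cbn [fst snd].
  intros E. assert (E1 := f_equal fst E); assert (E2 := f_equal snd E); cbn [fst snd] in E1, E2.
  set (P := IZR p) in *; set (Q := IZR q) in *. unfold Cadd; cbn [fst snd].
  transitivity ((P * P + Q * Q) * (a ^ 2 + b ^ 2 + (c ^ 2 + d ^ 2))
                - (P * a + Q * c) ^ 2 - (P * b + Q * d) ^ 2); [ring|].
  rewrite E1, E2. ring.
Qed.

Lemma Cmod_vel_le_Cmod_omhat v j :
  Cadd (Cscale (IZR (fst j)) (fst (v j))) (Cscale (IZR (snd j)) (snd (v j))) = C0 ->
  (j = k0 -> v j = (C0, C0)) ->
  Cmod (fst (v j)) <= Cmod (omhat v j) /\ Cmod (snd (v j)) <= Cmod (omhat v j).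
Proof.
  intros D Z. destruct (classic (j = k0)) as [E|E].
  - rewrite (Z E). simpl. rewrite Cmod_C0. split; apply Cmod_ge0.
  - pose proof (Cmod_omhat_sq v j D). pose proof (knorm2_ge1 j E).
    pose proof (Cmod_ge0 (fst (v j))). pose proof (Cmod_ge0 (snd (v j))).
    pose proof (Cmod_ge0 (omhat v j)).
    pose proof (pow2_ge_0 (Cmod (fst (v j)))). pose proof (pow2_ge_0 (Cmod (snd (v j)))).
    split; apply Rsqr_incr_0_var; unfold Rsqr; nra.
Qed.

Lemma omhat_zero v l : v l = (C0, C0) -> omhat v l = C0.
Proof. intros E; unfold omhat; rewrite E; cx_ring. Qed.

Lemma Cmod_trig_eval_le M c x1 x2 :
  Cmod (trig_eval M c x1 x2) <= Rsum (box M) (fun k => Cmod (c k)).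
Proof.
  eapply Rle_trans; [apply Cmod_Csum|]. apply Rsum_le. intros k _.
  rewrite Cmod_mul, Cmod_Cexpi. lra.
Qed.

Section HighModes.
Variables (N : nat) (v : VField) (W D : R).
Hypothesis Hsupp : forall l, (kinf l > Z.of_nat N)%Z \/ l = k0 -> v l = (C0, C0).
Hypothesis Hdiv : divfree v.
Hypothesis HW : forall l, Cmod (omhat v l) <= W.
Hypothesis HD : forall l, knorm l >= INR N / 2 -> Cmod (omhat v l) <= D.
Hypothesis HD0 : 0 <= D.

Lemma Cmod_adv_le j l : (kinf l <= Z.of_nat N)%Z ->
  Cmod (adv v j l) <= 2 * INR N * Cmod (omhat v j).
Proof.
  intros Hl. unfold adv. rewrite Cmod_Ci_mul. eapply Rle_trans; [apply Cmod_add|].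
  rewrite !Cmod_scale.
  destruct (Cmod_vel_le_Cmod_omhat v j (Hdiv j) (fun E => Hsupp j (or_intror E))) as [U1 U2].
  assert (HlN : IZR (kinf l) <= INR N) by (rewrite INR_IZR_INZ; now apply IZR_le).
  pose proof (Rabs_fst_le_kinf l); pose proof (Rabs_snd_le_kinf l).
  pose proof (Cmod_ge0 (fst (v j))); pose proof (Cmod_ge0 (snd (v j))).
  pose proof (Rabs_pos (IZR (fst l))); pose proof (Rabs_pos (IZR (snd l))). nra.
Qed.

(* Since [kinf k <= kinf j + kinf (k - j)], one of the two modes is at least [N/2]. *)
Lemma omhat_pair_le k j : (kinf k > Z.of_nat N)%Z ->
  Cmod (omhat v j) * Cmod (omhat v (ksub k j)) <= W * D.
Proof.
  intros Hk. pose proof (kinf_ksub k j).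
  assert (Hhalf : forall l, (Z.of_nat N <= 2 * kinf l)%Z -> knorm l >= INR N / 2).
  { intros l Hl. apply Rle_ge. eapply Rle_trans; [|apply kinf_le_knorm].
    apply Rmult_le_reg_l with 2; [lra|]. replace (2 * (INR N / 2)) with (INR N) by field.
    rewrite INR_IZR_INZ, <- mult_IZR. now apply IZR_le. }
  pose proof (Cmod_ge0 (omhat v j)); pose proof (Cmod_ge0 (omhat v (ksub k j))).
  pose proof (HW j); pose proof (HW (ksub k j)).
  destruct (Z_le_gt_dec (2 * kinf j) (Z.of_nat N)).
  - pose proof (HD (ksub k j) (Hhalf (ksub k j) ltac:(lia))). nra.
  - pose proof (HD j (Hhalf j ltac:(lia))). nra.
Qed.

Lemma Cmod_NLw_high k : (kinf k > Z.of_nat N)%Z ->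
  Cmod (NLw N v k) <= (2 * INR N + 1) ^ 2 * (2 * INR N * (W * D)).
Proof.
  intros Hk. unfold NLw. rewrite <- length_box. apply Cmod_Csum_le.
  intros j Hj. apply In_box in Hj.
  pose proof (HW k0); pose proof (Cmod_ge0 (omhat v k0)); pose proof (pos_INR N).
  destruct (Z_le_gt_dec (kinf (ksub k j)) (Z.of_nat N)) as [Hl|Hl].
  - rewrite Cmod_mul. pose proof (Cmod_adv_le j (ksub k j) Hl).
    pose proof (omhat_pair_le k j Hk).
    pose proof (Cmod_ge0 (omhat v (ksub k j))). pose proof (Cmod_ge0 (omhat v j)).
    nra.
  - rewrite (omhat_zero v _ (Hsupp _ (or_introl Hl))), Cmul_0_r, Cmod_C0.
    apply Rmult_le_pos; [lra|]. apply Rmult_le_pos; nra.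
Qed.

Lemma Cmod_high_nl_fun_le x1 x2 :
  Cmod (high_nl_fun N v x1 x2) <=
  (4 * INR N + 1) ^ 2 * ((2 * INR N + 1) ^ 2 * (2 * INR N * (W * D))).
Proof.
  eapply Rle_trans; [apply Cmod_trig_eval_le|].
  replace (4 * INR N + 1) with (2 * INR (2 * N) + 1) by (rewrite mult_INR; simpl; ring).
  rewrite <- length_box, <- Rsum_const. apply Rsum_le. intros k _.
  destruct (Z.leb_spec (kinf k) (Z.of_nat N)).
  - rewrite Cmod_C0. eapply Rle_trans; [apply (Cmod_ge0 (NLw N v (Z.of_nat N + 1, 0)%Z))|].
    apply Cmod_NLw_high. unfold kinf; simpl. lia.
  - apply Cmod_NLw_high. lia.
Qed.

End HighModes.

(** * Riemann sums on the torus *)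

Fixpoint nsum (f : nat -> R) (n : nat) : R :=
  match n with O => 0 | S n => nsum f n + f n end.

Lemma sum_f_R0_nsum f n : sum_f_R0 f n = nsum f (S n).
Proof. induction n; simpl. - ring. - rewrite IHn. simpl. ring. Qed.

Lemma nsum_add_range f a b : nsum f (a + b) = nsum f a + nsum (fun i => f (a + i)%nat) b.
Proof.
  induction b; simpl. - rewrite Nat.add_0_r; ring.
  - rewrite Nat.add_succ_r. simpl. rewrite IHb. ring.
Qed.

Lemma nsum_ext f g n : (forall i, (i < n)%nat -> f i = g i) -> nsum f n = nsum g n.
Proof. induction n; simpl; intros H; auto. rewrite IHn, H; auto. Qed.

Lemma nsum_le f g n : (forall i, (i < n)%nat -> f i <= g i) -> nsum f n <= nsum g n.
Proof.
  induction n; simpl; intros H; [lra|].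
  pose proof (H n ltac:(lia)). pose proof (IHn (fun i Hi => H i ltac:(lia))). lra.
Qed.

Lemma nsum_const c n : nsum (fun _ => c) n = INR n * c.
Proof. induction n; simpl nsum. - simpl; ring. - rewrite IHn, S_INR; ring. Qed.

Lemma nsum_minus f g n : nsum (fun i => f i - g i) n = nsum f n - nsum g n.
Proof. induction n; simpl. - ring. - rewrite IHn; ring. Qed.

Lemma nsum_scal c f n : nsum (fun i => c * f i) n = c * nsum f n.
Proof. induction n; simpl. - ring. - rewrite IHn; ring. Qed.

Lemma Rabs_nsum f n : Rabs (nsum f n) <= nsum (fun i => Rabs (f i)) n.
Proof.
  induction n; simpl. - rewrite Rabs_R0; lra.
  - eapply Rle_trans; [apply Rabs_triang|]. lra.
Qed.

Lemma nsum_telescope F n : nsum (fun a => F (S a) - F a) n = F n - F O.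
Proof. induction n; simpl. - ring. - rewrite IHn. ring. Qed.

Lemma nsum_div_blocks F K m : (0 < K)%nat ->
  nsum (fun i => F (i / K)%nat) (K * m) = INR K * nsum F m.
Proof.
  intros HK. induction m. - rewrite Nat.mul_0_r; simpl; ring.
  - replace (K * S m)%nat with (K * m + K)%nat by lia. rewrite nsum_add_range, IHm.
    rewrite (nsum_ext (fun i => F ((K * m + i) / K)%nat) (fun _ => F m)).
    + rewrite nsum_const. simpl nsum. ring.
    + intros i Hi. f_equal. rewrite Nat.mul_comm, Nat.div_add_l by lia.
      rewrite Nat.div_small by lia. lia.
Qed.

Lemma Rsum_seq f m : Rsum (seq 0 m) f = nsum f m.
Proof. induction m; auto. rewrite seq_S, Rsum_app, IHm. simpl. ring. Qed.

Lemma Csum_seq f m :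
  Csum (seq 0 m) f = (nsum (fun a => fst (f a)) m, nsum (fun a => snd (f a)) m).
Proof.
  induction m; auto. rewrite seq_S, Csum_app, IHm. simpl.
  unfold Cadd, C0; simpl. f_equal; ring.
Qed.

Definition unif_cont2 (g : R -> R -> R) : Prop := forall e, e > 0 -> exists d, d > 0 /\
  forall x1 x2 y1 y2, Rabs (x1 - y1) <= d -> Rabs (x2 - y2) <= d ->
    Rabs (g x1 x2 - g y1 y2) <= e.

Definition grid_pt (n a : nat) : R := 2 * PI * INR a / INR (S n).

Lemma riemann_T2_nsum g n : riemann_T2 g n =
  (2 * PI / INR (S n)) ^ 2 *
  nsum (fun a => nsum (fun b => g (grid_pt n a) (grid_pt n b)) (S n)) (S n).
Proof.
  unfold riemann_T2, grid_pt. rewrite sum_f_R0_nsum. f_equal.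
  apply nsum_ext. intros; apply sum_f_R0_nsum.
Qed.

Lemma riemann_T2_le g n c : (forall x1 x2, g x1 x2 <= c) -> riemann_T2 g n <= 4 * PI ^ 2 * c.
Proof.
  intros H. rewrite riemann_T2_nsum. assert (Hn : 0 < INR (S n)) by (apply lt_0_INR; lia).
  apply Rle_trans with ((2 * PI / INR (S n)) ^ 2 * nsum (fun a => nsum (fun b => c) (S n)) (S n)).
  - apply Rmult_le_compat_l; [apply pow2_ge_0|].
    apply nsum_le; intros; apply nsum_le; intros; auto.
  - rewrite !nsum_const. right. field. lra.
Qed.

(* [grid_pt n] has [n + 1] nodes, so [K * S n - 1] indexes the [K]-fold refinement. *)
Lemma grid_pt_refine_close n K i : (0 < K)%nat ->
  Rabs (grid_pt (K * S n - 1) i - grid_pt n (i / K)) <= 2 * PI / INR (S n).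
Proof.
  intros HK. unfold grid_pt. replace (S (K * S n - 1)) with (K * S n)%nat by lia.
  pose proof (Nat.div_mod i K ltac:(lia)) as Hd.
  pose proof (Nat.mod_upper_bound i K ltac:(lia)) as Hm.
  set (q := (i / K)%nat) in *; set (r := (i mod K)%nat) in *.
  assert (Ei : INR i = INR K * INR q + INR r) by (rewrite Hd at 1; rewrite plus_INR, mult_INR; ring).
  assert (Hr : INR r + 1 <= INR K) by (rewrite <- S_INR; apply le_INR; lia).
  pose proof (pos_INR r). pose proof PI_RGT_0.
  assert (HK' : 0 < INR K) by (apply lt_0_INR; lia).
  assert (Hn : 0 < INR (S n)) by (apply lt_0_INR; lia).
  rewrite mult_INR, Ei.
  replace (2 * PI * (INR K * INR q + INR r) / (INR K * INR (S n)) - 2 * PI * INR q / INR (S n))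
    with (2 * PI / INR (S n) * (INR r / INR K)) by (field; lra).
  assert (0 < 2 * PI / INR (S n)) by (apply Rdiv_lt_0_compat; lra).
  assert (INR r / INR K <= 1).
  { apply Rmult_le_reg_r with (INR K); [lra|]. unfold Rdiv; rewrite Rmult_assoc, Rinv_l; lra. }
  assert (0 <= INR r / INR K) by (apply Rmult_le_pos; [lra|apply Rlt_le, Rinv_0_lt_compat; lra]).
  rewrite Rabs_pos_eq by nra. nra.
Qed.

Lemma riemann_T2_refine g n K e : (0 < K)%nat ->
  (forall x1 x2 y1 y2, Rabs (x1 - y1) <= 2 * PI / INR (S n) ->
     Rabs (x2 - y2) <= 2 * PI / INR (S n) -> Rabs (g x1 x2 - g y1 y2) <= e) ->
  Rabs (riemann_T2 g (K * S n - 1) - riemann_T2 g n) <= 4 * PI ^ 2 * e.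
Proof.
  intros HK Hg. rewrite !riemann_T2_nsum.
  set (n' := (K * S n - 1)%nat). replace (S n') with (K * S n)%nat by (unfold n'; lia).
  set (G := fun a b => g (grid_pt n (a / K)%nat) (grid_pt n (b / K)%nat)).
  assert (HG : nsum (fun a => nsum (fun b => G a b) (K * S n)) (K * S n) =
               INR K * INR K * nsum (fun a => nsum (fun b => g (grid_pt n a) (grid_pt n b)) (S n)) (S n)).
  { unfold G.
    rewrite (nsum_ext _ (fun a => INR K *
       (fun a0 => nsum (fun b => g (grid_pt n a0) (grid_pt n b)) (S n)) (a / K)%nat)).
    - rewrite nsum_scal, (nsum_div_blocks (fun a0 => nsum (fun b => g (grid_pt n a0) (grid_pt n b)) (S n)))
        by auto. ring.
    - intros a _. apply (nsum_div_blocks (fun b => g (grid_pt n (a / K)%nat) (grid_pt n b))); auto. }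
  assert (HK' : 0 < INR K) by (apply lt_0_INR; lia).
  assert (Hn : 0 < INR (S n)) by (apply lt_0_INR; lia).
  assert (Eh : (2 * PI / INR (S n)) ^ 2 = (2 * PI / INR (K * S n)) ^ 2 * (INR K * INR K))
    by (rewrite mult_INR; field; lra).
  rewrite Eh, Rmult_assoc, <- HG, <- Rmult_minus_distr_l, <- nsum_minus.
  rewrite (nsum_ext _ (fun a => nsum (fun b => g (grid_pt n' a) (grid_pt n' b) - G a b) (K * S n)))
    by (intros; now rewrite nsum_minus).
  rewrite Rabs_mult, Rabs_pos_eq by apply pow2_ge_0.
  apply Rle_trans with ((2 * PI / INR (K * S n)) ^ 2 * nsum (fun a => nsum (fun b => e) (K * S n)) (K * S n)).
  - apply Rmult_le_compat_l; [apply pow2_ge_0|].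
    eapply Rle_trans; [apply Rabs_nsum|]. apply nsum_le. intros a Ha.
    eapply Rle_trans; [apply Rabs_nsum|]. apply nsum_le. intros b Hb.
    apply Hg; apply grid_pt_refine_close; auto.
  - rewrite !nsum_const. right. rewrite mult_INR. field. lra.
Qed.

Lemma grid_mesh_small d : d > 0 -> exists N0, forall n, (n >= N0)%nat -> 2 * PI / INR (S n) <= d.
Proof.
  intros Hd. destruct (archimed (2 * PI / d)) as [H1 _]. pose proof PI_RGT_0.
  assert (0 < 2 * PI / d) by (apply Rdiv_lt_0_compat; lra).
  exists (Z.to_nat (up (2 * PI / d))). intros n Hn.
  assert (INR (S n) > 2 * PI / d).
  { apply Rlt_le_trans with (IZR (up (2 * PI / d))); auto.
    rewrite INR_IZR_INZ. apply IZR_le. assert (0 < up (2 * PI / d))%Z by (apply lt_IZR; lra). lia. }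
  assert ((2 * PI / d) * d = 2 * PI) by (field; lra).
  assert ((2 * PI / INR (S n)) * INR (S n) = 2 * PI) by (field; lra).
  apply Rmult_le_reg_r with (INR (S n)); nra.
Qed.

(* Two grids are compared through their common refinement with [(n+1)(m+1)] nodes. *)
Lemma riemann_T2_Cauchy g : unif_cont2 g -> Cauchy_crit (riemann_T2 g).
Proof.
  intros Hg eps Heps. pose proof PI_RGT_0.
  destruct (Hg (eps / (16 * PI ^ 2))) as [d [Hd Hgd]]; [apply Rdiv_lt_0_compat; nra|].
  destruct (grid_mesh_small d Hd) as [N0 HN0]. exists N0. intros n m Hn Hm. unfold Rdist.
  assert (A1 : Rabs (riemann_T2 g (S m * S n - 1) - riemann_T2 g n) <= eps / 4).
  { replace (eps / 4) with (4 * PI ^ 2 * (eps / (16 * PI ^ 2))) by (field; lra).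
    apply riemann_T2_refine; [lia|]. intros; apply Hgd; eapply Rle_trans; eauto. }
  assert (A2 : Rabs (riemann_T2 g (S m * S n - 1) - riemann_T2 g m) <= eps / 4).
  { replace (eps / 4) with (4 * PI ^ 2 * (eps / (16 * PI ^ 2))) by (field; lra).
    rewrite Nat.mul_comm. apply riemann_T2_refine; [lia|].
    intros; apply Hgd; eapply Rle_trans; eauto. }
  replace (riemann_T2 g n - riemann_T2 g m) with
    ((riemann_T2 g (S m * S n - 1) - riemann_T2 g m) - (riemann_T2 g (S m * S n - 1) - riemann_T2 g n))
    by ring.
  unfold Rminus at 1. eapply Rle_lt_trans; [apply Rabs_triang|]. rewrite Rabs_Ropp. lra.
Qed.

Lemma riemann_T2_cv g : unif_cont2 g -> Un_cv (riemann_T2 g) (int_T2 g).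
Proof.
  intros Hg. destruct (R_complete _ (riemann_T2_Cauchy g Hg)) as [l Hl].
  unfold int_T2. apply epsilon_spec. now exists l.
Qed.

Lemma Un_cv_le_eventually u l c n0 :
  Un_cv u l -> (forall n, (n >= n0)%nat -> u n <= c) -> l <= c.
Proof.
  intros Hu Hc. destruct (Rle_dec l c); auto. exfalso.
  destruct (Hu (l - c)) as [N HN]; [lra|].
  specialize (HN (max N n0) ltac:(lia)). specialize (Hc (max N n0) ltac:(lia)).
  apply Rabs_def2 in HN. lra.
Qed.

Lemma Un_cv_ge_eventually u l c n0 :
  Un_cv u l -> (forall n, (n >= n0)%nat -> c <= u n) -> c <= l.
Proof.
  intros Hu Hc. destruct (Rle_dec c l); auto. exfalso.
  destruct (Hu (c - l)) as [N HN]; [lra|].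
  specialize (HN (max N n0) ltac:(lia)). specialize (Hc (max N n0) ltac:(lia)).
  apply Rabs_def2 in HN. lra.
Qed.

Lemma sin_lipschitz a b : Rabs (sin a - sin b) <= Rabs (a - b).
Proof.
  destruct (MVT_abs sin cos b a) as [c [E _]]; [intros; apply derivable_pt_lim_sin|].
  rewrite E. pose proof (COS_bound c). pose proof (Rabs_pos (a - b)).
  assert (Rabs (cos c) <= 1) by (apply Rabs_le; lra). nra.
Qed.

Lemma cos_lipschitz a b : Rabs (cos a - cos b) <= Rabs (a - b).
Proof.
  destruct (MVT_abs cos (fun x => - sin x) b a) as [c [E _]]; [intros; apply derivable_pt_lim_cos|].
  rewrite E. pose proof (SIN_bound c). pose proof (Rabs_pos (a - b)).
  assert (Rabs (- sin c) <= 1) by (apply Rabs_le; lra). nra.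
Qed.

Lemma Cexpi_lipschitz a b : Cmod (Csub (Cexpi a) (Cexpi b)) <= 2 * Rabs (a - b).
Proof.
  eapply Rle_trans; [apply Cmod_le_Rabs_sum|]. unfold Csub, Cadd, Copp, Cexpi; cbn [fst snd].
  pose proof (sin_lipschitz a b); pose proof (cos_lipschitz a b). unfold Rminus in *. lra.
Qed.

Definition trig_lip_const (M : nat) (c : Z2 -> Cx) : R :=
  Rsum (box M) (fun k => Cmod (c k) * (2 * (Rabs (IZR (fst k)) + Rabs (IZR (snd k))))).

Lemma trig_lip_const_ge0 M c : 0 <= trig_lip_const M c.
Proof.
  apply Rsum_nonneg. intros k _. pose proof (Cmod_ge0 (c k)).
  pose proof (Rabs_pos (IZR (fst k))); pose proof (Rabs_pos (IZR (snd k))). nra.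
Qed.

Lemma trig_eval_lipschitz M c x1 x2 y1 y2 :
  Cmod (Csub (trig_eval M c x1 x2) (trig_eval M c y1 y2)) <=
  trig_lip_const M c * (Rabs (x1 - y1) + Rabs (x2 - y2)).
Proof.
  unfold trig_eval, trig_lip_const. rewrite <- Csum_sub.
  eapply Rle_trans; [apply Cmod_Csum|].
  rewrite Rmult_comm, <- Rsum_scal. apply Rsum_le. intros k _.
  set (k1 := IZR (fst k)); set (k2 := IZR (snd k)).
  replace (Csub (Cmul (c k) (Cexpi (k1 * x1 + k2 * x2))) (Cmul (c k) (Cexpi (k1 * y1 + k2 * y2))))
    with (Cmul (c k) (Csub (Cexpi (k1 * x1 + k2 * x2)) (Cexpi (k1 * y1 + k2 * y2)))) by cx_ring.
  rewrite Cmod_mul. pose proof (Cmod_ge0 (c k)).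
  pose proof (Cexpi_lipschitz (k1 * x1 + k2 * x2) (k1 * y1 + k2 * y2)).
  replace (k1 * x1 + k2 * x2 - (k1 * y1 + k2 * y2)) with (k1 * (x1 - y1) + k2 * (x2 - y2)) in H0
    by ring.
  pose proof (Rabs_triang (k1 * (x1 - y1)) (k2 * (x2 - y2))). rewrite !Rabs_mult in H1.
  pose proof (Rabs_pos k1); pose proof (Rabs_pos k2).
  pose proof (Rabs_pos (x1 - y1)); pose proof (Rabs_pos (x2 - y2)).
  apply Rle_trans with (Cmod (c k) * (2 * (Rabs k1 * Rabs (x1 - y1) + Rabs k2 * Rabs (x2 - y2)))).
  - apply Rmult_le_compat_l; lra.
  - assert (0 <= Cmod (c k) * (Rabs k1 * Rabs (x2 - y2) + Rabs k2 * Rabs (x1 - y1))) by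
      (apply Rmult_le_pos; nra).
    nra.
Qed.

Lemma rpow_Rpower x p : 0 < x -> rpow x p = Rpower x p.
Proof. intros H; unfold rpow; destruct Rle_dec; lra. Qed.

Lemma rpow_nonpos x p : x <= 0 -> rpow x p = 0.
Proof. intros H; unfold rpow; destruct Rle_dec; lra. Qed.

Lemma rpow_ge0 x p : 0 <= rpow x p.
Proof. unfold rpow; destruct Rle_dec; [lra|]. apply Rlt_le, exp_pos. Qed.

Lemma rpow_le_compat x y p : 0 <= p -> 0 <= x <= y -> rpow x p <= rpow y p.
Proof.
  intros Hp [Hx Hxy]. destruct (Req_dec x 0).
  - subst. rewrite rpow_nonpos by lra. apply rpow_ge0.
  - rewrite !rpow_Rpower by lra. apply Rle_Rpower_l; lra.
Qed.

Lemma Rpower_1_base p : Rpower 1 p = 1.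
Proof. unfold Rpower. now rewrite ln_1, Rmult_0_r, exp_0. Qed.

Lemma rpow_lipschitz_ordered p M x y : 1 <= p -> 0 <= x <= y -> y <= M ->
  Rabs (rpow x p - rpow y p) <= p * Rpower M (p - 1) * (y - x).
Proof.
  intros Hp Hxy HyM. destruct (Req_dec x y).
  { subst. rewrite Rminus_diag, Rabs_R0, Rminus_diag, Rmult_0_r. lra. }
  assert (HM : 0 < Rpower M (p - 1)) by apply exp_pos.
  destruct (Req_dec x 0) as [->|Hx0].
  - rewrite rpow_nonpos, rpow_Rpower by lra.
    replace (Rpower y p) with (y * Rpower y (p - 1)).
    2:{ rewrite <- (Rpower_1 y) at 1 by lra. rewrite <- Rpower_plus. f_equal; ring. }
    assert (0 < Rpower y (p - 1)) by apply exp_pos.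
    assert (Rpower y (p - 1) <= Rpower M (p - 1)) by (apply Rle_Rpower_l; lra).
    rewrite Rminus_0_l, Rabs_Ropp, Rabs_pos_eq by nra.
    assert (y * Rpower y (p - 1) <= y * Rpower M (p - 1)) by (apply Rmult_le_compat_l; lra).
    assert (0 <= (p - 1) * (Rpower M (p - 1) * y)) by (apply Rmult_le_pos; nra). nra.
  - rewrite !rpow_Rpower by lra.
    destruct (MVT_cor2 (fun t => Rpower t p) (fun t => p * Rpower t (p - 1)) x y)
      as [c [E Hc]]; [lra| intros c Hc; apply derivable_pt_lim_power; lra |].
    rewrite <- Rabs_Ropp, Ropp_minus_distr, E.
    assert (Rpower c (p - 1) <= Rpower M (p - 1)) by (apply Rle_Rpower_l; lra).
    assert (0 < Rpower c (p - 1)) by apply exp_pos.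
    rewrite Rabs_mult, Rabs_pos_eq, Rabs_pos_eq by nra.
    apply Rmult_le_compat_r; nra.
Qed.

Lemma rpow_lipschitz p M x y : 1 <= p -> 0 <= x <= M -> 0 <= y <= M ->
  Rabs (rpow x p - rpow y p) <= p * Rpower M (p - 1) * Rabs (x - y).
Proof.
  intros Hp Hx Hy. destruct (Rle_dec x y).
  - rewrite (Rabs_minus_sym x y), (Rabs_pos_eq (y - x)) by lra.
    apply rpow_lipschitz_ordered; lra.
  - rewrite (Rabs_minus_sym (rpow x p)), (Rabs_pos_eq (x - y)) by lra.
    apply rpow_lipschitz_ordered; lra.
Qed.

Lemma unif_cont_rpow_trig_eval M c p : 1 <= p ->
  unif_cont2 (fun x1 x2 => rpow (Cmod (trig_eval M c x1 x2)) p).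
Proof.
  intros Hp e He. set (M0 := Rsum (box M) (fun k => Cmod (c k)) + 1).
  assert (Hbound : forall a b, 0 <= Cmod (trig_eval M c a b) <= M0).
  { intros; split; [apply Cmod_ge0|]. pose proof (Cmod_trig_eval_le M c a b). unfold M0; lra. }
  assert (HM0 : 0 < M0)
    by (pose proof (Rsum_nonneg (box M) (fun k => Cmod (c k)) (fun k _ => Cmod_ge0 _)); unfold M0; lra).
  set (A := p * Rpower M0 (p - 1)). assert (HA : 0 < A) by (pose proof (exp_pos ((p - 1) * ln M0)); unfold A, Rpower; nra).
  set (L := trig_lip_const M c). assert (HL : 0 <= L) by apply trig_lip_const_ge0.
  exists (e / (2 * A * (L + 1))). split; [apply Rdiv_lt_0_compat; nra|].
  intros x1 x2 y1 y2 H1 H2.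
  eapply Rle_trans; [apply (rpow_lipschitz p M0); auto|]. fold A.
  eapply Rle_trans.
  { apply Rmult_le_compat_l; [lra|]. eapply Rle_trans; [apply Cmod_triang_inv|].
    apply trig_eval_lipschitz. }
  fold L. apply Rle_trans with (A * (L * (2 * (e / (2 * A * (L + 1)))))).
  - apply Rmult_le_compat_l; [lra|]. apply Rmult_le_compat_l; lra.
  - replace (A * (L * (2 * (e / (2 * A * (L + 1)))))) with (e * (L / (L + 1))) by (field; lra).
    assert (L / (L + 1) <= 1) by (apply Rmult_le_reg_r with (L + 1); [lra|]; field_simplify; lra).
    assert (0 <= L / (L + 1)) by (apply Rmult_le_pos; [lra|apply Rlt_le, Rinv_0_lt_compat; lra]).
    nra.
Qed.

(** * Fourier coefficients and the [L^p] norm *)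

Lemma sin_cos_2PI_mul m : sin (2 * PI * IZR m) = 0 /\ cos (2 * PI * IZR m) = 1.
Proof.
  assert (S0 : sin (PI * IZR m) = 0) by (apply sin_eq_0_1; exists m; ring).
  split.
  - apply sin_eq_0_1. exists (2 * m)%Z. rewrite mult_IZR. ring.
  - replace (2 * PI * IZR m) with (2 * (PI * IZR m)) by ring. rewrite cos_2a_sin, S0. ring.
Qed.

(* Lagrange's trigonometric identities, by telescoping against [2 sin (th/2)]. *)
Lemma nsum_cos_mul th n :
  2 * sin (th / 2) * nsum (fun a => cos (INR a * th)) n = sin ((INR n - / 2) * th) + sin (th / 2).
Proof.
  rewrite <- nsum_scal.
  rewrite (nsum_ext _ (fun a => sin ((INR (S a) - / 2) * th) - sin ((INR a - / 2) * th))).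
  - pose proof (nsum_telescope (fun a => sin ((INR a - / 2) * th)) n) as T. cbv beta in T.
    rewrite T. replace ((INR 0 - / 2) * th) with (- (th / 2)) by (simpl; field).
    rewrite sin_neg. ring.
  - intros a _. rewrite S_INR.
    replace ((INR a + 1 - / 2) * th) with (INR a * th + th / 2) by field.
    replace ((INR a - / 2) * th) with (INR a * th - th / 2) by field.
    rewrite sin_plus, sin_minus. ring.
Qed.

Lemma nsum_sin_mul th n :
  2 * sin (th / 2) * nsum (fun a => sin (INR a * th)) n = cos (th / 2) - cos ((INR n - / 2) * th).
Proof.
  rewrite <- nsum_scal.
  rewrite (nsum_ext _ (fun a => - cos ((INR (S a) - / 2) * th) - - cos ((INR a - / 2) * th))).
  - pose proof (nsum_telescope (fun a => - cos ((INR a - / 2) * th)) n) as T. cbv beta in T.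
    rewrite T. replace ((INR 0 - / 2) * th) with (- (th / 2)) by (simpl; field).
    rewrite cos_neg. ring.
  - intros a _. rewrite S_INR.
    replace ((INR a + 1 - / 2) * th) with (INR a * th + th / 2) by field.
    replace ((INR a - / 2) * th) with (INR a * th - th / 2) by field.
    rewrite cos_plus, cos_minus. ring.
Qed.

Lemma grid_sum_Cexpi n m : (Z.abs m <= Z.of_nat n)%Z ->
  Csum (seq 0 (S n)) (fun a => Cexpi (IZR m * grid_pt n a)) =
  if Z.eq_dec m 0 then (INR (S n), 0) else C0.
Proof.
  intros Hm. rewrite Csum_seq. unfold Cexpi; cbn [fst snd]. destruct (Z.eq_dec m 0).
  { subst. f_equal.
    - rewrite (nsum_ext _ (fun _ => 1)), nsum_const; [ring|].
      intros; now rewrite Rmult_0_l, cos_0.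
    - rewrite (nsum_ext _ (fun _ => 0)), nsum_const; [ring|].
      intros; now rewrite Rmult_0_l, sin_0. }
  pose proof PI_RGT_0. assert (Hn : 0 < INR (S n)) by (apply lt_0_INR; lia).
  set (th := 2 * PI * IZR m / INR (S n)).
  assert (Eg : forall a, IZR m * grid_pt n a = INR a * th) by (intros; unfold th, grid_pt; field; lra).
  (* [0 < |m| <= n] keeps [th / 2] away from the zeros of [sin] *)
  assert (Hs : sin (th / 2) <> 0).
  { intros E. apply sin_eq_0_0 in E. destruct E as [k Ek].
    assert (E' : IZR m = IZR k * INR (S n)).
    { apply Rmult_eq_reg_l with PI; [|lra].
      replace (PI * IZR m) with (th / 2 * INR (S n)) by (unfold th; field; lra).
      rewrite Ek. ring. }
    rewrite INR_IZR_INZ, <- mult_IZR in E'. apply eq_IZR in E'. subst m.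
    destruct (Z.eq_dec k 0); [subst; simpl in n0; congruence|nia]. }
  destruct (sin_cos_2PI_mul m) as [S1 C1].
  assert (Hend : (INR (S n) - / 2) * th = 2 * PI * IZR m - th / 2) by (unfold th; field; lra).
  unfold C0; f_equal; apply Rmult_eq_reg_l with (2 * sin (th / 2)); try lra;
    rewrite Rmult_0_r, (nsum_ext _ _ _ (fun a _ => f_equal _ (Eg a))).
  - rewrite nsum_cos_mul, Hend, sin_minus, S1, C1. ring.
  - rewrite nsum_sin_mul, Hend, cos_minus, S1, C1. ring.
Qed.

Definition grid_sum2 (n : nat) (F : R -> R -> Cx) : Cx :=
  Csum (seq 0 (S n)) (fun a => Csum (seq 0 (S n)) (fun b => F (grid_pt n a) (grid_pt n b))).

(* Discrete orthogonality: on a grid with more than [2M] nodes per direction the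
   exponentials of [box M] stay orthogonal. *)
Lemma grid_sum2_fourier_coeff M n c k : (2 * M <= n)%nat -> (kinf k <= Z.of_nat M)%Z ->
  grid_sum2 n (fun x1 x2 =>
    Cmul (trig_eval M c x1 x2) (Cexpi (- (IZR (fst k) * x1 + IZR (snd k) * x2))))
  = Cscale (INR (S n) ^ 2) (c k).
Proof.
  intros Hn Hk. unfold grid_sum2, trig_eval.
  set (E := fun j a => Cexpi (IZR j * grid_pt n a)).
  transitivity (Csum (box M) (fun k' => Cmul (c k')
     (Cmul (Csum (seq 0 (S n)) (E (fst k' - fst k)%Z)) (Csum (seq 0 (S n)) (E (snd k' - snd k)%Z))))).
  - set (T := fun a b k' => Cmul (c k') (Cmul (E (fst k' - fst k)%Z a) (E (snd k' - snd k)%Z b))).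
    transitivity (Csum (seq 0 (S n)) (fun a => Csum (box M) (fun k' =>
                    Csum (seq 0 (S n)) (fun b => T a b k')))).
    + apply Csum_ext; intros a _. rewrite <- Csum_swap. apply Csum_ext; intros b _.
      rewrite Csum_mul_r. apply Csum_ext; intros k' _.
      unfold T, E. rewrite !minus_IZR.
      set (x1 := grid_pt n a); set (x2 := grid_pt n b).
      replace (Cmul (Cmul (c k') (Cexpi (IZR (fst k') * x1 + IZR (snd k') * x2)))
                    (Cexpi (- (IZR (fst k) * x1 + IZR (snd k) * x2))))
        with (Cmul (c k') (Cmul (Cexpi (IZR (fst k') * x1 + IZR (snd k') * x2))
                    (Cexpi (- (IZR (fst k) * x1 + IZR (snd k) * x2))))) by cx_ring.
      rewrite !Cexpi_add. do 2 f_equal. ring.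
    + rewrite Csum_swap. apply Csum_ext; intros k' _. unfold T.
      rewrite <- Csum_mul_Csum, Csum_mul_l. apply Csum_ext; intros a _.
      rewrite Csum_mul_l. apply Csum_ext; intros b _. reflexivity.
  - rewrite (Csum_single _ k); [| apply NoDup_box | now apply In_box |].
    + unfold E. rewrite !Z.sub_diag, !grid_sum_Cexpi by (simpl; lia).
      destruct (Z.eq_dec 0 0); [cx_ring|congruence].
    + intros k' Hk' Hne. apply In_box in Hk'. unfold E.
      assert (B : forall x y, (Z.abs x <= Z.of_nat M)%Z -> (Z.abs y <= Z.of_nat M)%Z ->
                 (Z.abs (x - y) <= Z.of_nat n)%Z) by (intros; lia).
      unfold kinf in Hk, Hk'.
      rewrite !grid_sum_Cexpi by (apply B; lia).
      destruct (Z.eq_dec (fst k' - fst k) 0), (Z.eq_dec (snd k' - snd k) 0); try cx_ring.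
      exfalso; apply Hne. destruct k, k'; simpl in *; f_equal; lia.
Qed.

Lemma fourPI2_gt1 : 1 < 4 * PI ^ 2.
Proof. pose proof PI2_3_2. nra. Qed.

Lemma Rpower_4PI2_root p : 1 <= p -> 1 <= Rpower (4 * PI ^ 2) (1 / p) <= 4 * PI ^ 2.
Proof.
  intros Hp. pose proof fourPI2_gt1.
  assert (0 < 1 / p <= 1) by (split; [apply Rdiv_lt_0_compat|apply Rmult_le_reg_r with p;
    [|unfold Rdiv; rewrite Rmult_assoc, Rinv_l]]; lra).
  split.
  - rewrite <- (Rpower_O (4 * PI ^ 2)) at 1 by lra. apply Rle_Rpower; lra.
  - rewrite <- (Rpower_1 (4 * PI ^ 2)) at 2 by lra. apply Rle_Rpower; lra.
Qed.

Lemma Rpower_root x p : 0 < x -> 1 <= p -> Rpower (Rpower x p) (1 / p) = x.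
Proof.
  intros. rewrite Rpower_mult. replace (p * (1 / p)) with 1 by (field; lra). now apply Rpower_1.
Qed.

(* The torus has area [4 PI^2 > 1], which is why no normalisation constant appears below. *)
Lemma rpow_root_le I S p : 1 <= p -> 0 <= S -> I <= 4 * PI ^ 2 * rpow S p ->
  rpow I (1 / p) <= 4 * PI ^ 2 * S.
Proof.
  intros Hp HS HI. pose proof fourPI2_gt1. pose proof (Rpower_4PI2_root p Hp).
  destruct (Rle_dec I 0); [rewrite rpow_nonpos by auto; nra|].
  destruct (Req_dec S 0) as [->|HS0]; [rewrite rpow_nonpos in HI; lra|].
  rewrite rpow_Rpower in * by lra.
  apply Rle_trans with (Rpower (4 * PI ^ 2 * Rpower S p) (1 / p)).
  - apply Rle_Rpower_l; [apply Rlt_le, Rdiv_lt_0_compat|]; lra.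
  - rewrite <- Rpower_mult_distr, Rpower_root by (try apply exp_pos; lra). nra.
Qed.

Lemma rpow_root_ge I c p : 1 <= p -> 0 <= c -> 4 * PI ^ 2 * rpow c p <= I ->
  c <= rpow I (1 / p).
Proof.
  intros Hp Hc HI. pose proof fourPI2_gt1. pose proof (Rpower_4PI2_root p Hp).
  destruct (Req_dec c 0) as [->|Hc0]; [apply rpow_ge0|].
  rewrite rpow_Rpower in HI by lra. pose proof (exp_pos (p * ln c)).
  rewrite rpow_Rpower by (unfold Rpower in HI; nra).
  apply Rle_trans with (Rpower (4 * PI ^ 2 * Rpower c p) (1 / p)).
  - rewrite <- Rpower_mult_distr, Rpower_root by (try apply exp_pos; lra). nra.
  - apply Rle_Rpower_l; [apply Rlt_le, Rdiv_lt_0_compat|split]; unfold Rpower in *; nra.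
Qed.

Lemma Lp_norm_trig_eval_le M c p S : 1 <= p -> 0 <= S ->
  (forall x1 x2, Cmod (trig_eval M c x1 x2) <= S) -> Lp_norm p (trig_eval M c) <= 4 * PI ^ 2 * S.
Proof.
  intros Hp HS H. apply rpow_root_le; auto.
  apply (Un_cv_le_eventually _ _ _ O (riemann_T2_cv _ (unif_cont_rpow_trig_eval M c p Hp))).
  intros n _. apply riemann_T2_le. intros. apply rpow_le_compat; [lra|]. split; auto. apply Cmod_ge0.
Qed.

Lemma rpow_bernoulli x p : 1 <= p -> 0 <= x -> 1 + p * (x - 1) <= rpow x p.
Proof.
  intros Hp Hx. destruct (Req_dec x 0) as [->|Hx0]; [rewrite rpow_nonpos; lra|].
  rewrite rpow_Rpower by lra.
  assert (R1 : Rpower 1 (p - 1) = 1) by apply Rpower_1_base.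
  destruct (Rtotal_order x 1) as [Hlt|[->|Hgt]].
  - destruct (MVT_cor2 (fun t => Rpower t p) (fun t => p * Rpower t (p - 1)) x 1)
      as [c [E Hc]]; [lra|intros c Hc; apply derivable_pt_lim_power; lra|].
    rewrite Rpower_1_base in E.
    assert (Rpower c (p - 1) <= Rpower 1 (p - 1)) by (apply Rle_Rpower_l; lra).
    rewrite R1 in *.
    pose proof (exp_pos ((p - 1) * ln c)).
    assert (0 <= p * (1 - x) * (1 - Rpower c (p - 1))) by (apply Rmult_le_pos; [apply Rmult_le_pos|]; lra).
    nra.
  - rewrite Rpower_1_base. lra.
  - destruct (MVT_cor2 (fun t => Rpower t p) (fun t => p * Rpower t (p - 1)) 1 x)
      as [c [E Hc]]; [lra|intros c Hc; apply derivable_pt_lim_power; lra|].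
    rewrite Rpower_1_base in E.
    assert (Rpower 1 (p - 1) <= Rpower c (p - 1)) by (apply Rle_Rpower_l; lra).
    rewrite R1 in *.
    assert (0 <= p * (x - 1) * (Rpower c (p - 1) - 1)) by (apply Rmult_le_pos; [apply Rmult_le_pos|]; lra).
    nra.
Qed.

Lemma rpow_scale c y p : 0 < c -> 0 <= y -> rpow y p = Rpower c p * rpow (y / c) p.
Proof.
  intros Hc Hy. destruct (Req_dec y 0) as [->|Hy0].
  - rewrite !rpow_nonpos by (unfold Rdiv; rewrite ?Rmult_0_l; lra). ring.
  - assert (0 < y / c) by (apply Rdiv_lt_0_compat; lra).
    rewrite !rpow_Rpower, Rpower_mult_distr by lra. f_equal. field. lra.
Qed.

(* Jensen's inequality for the convex function [rpow _ p], from the tangent line at the mean. *)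
Lemma rpow_jensen {A} (l : list A) y p : 1 <= p -> (0 < length l)%nat -> (forall x, 0 <= y x) ->
  INR (length l) * rpow (Rsum l y / INR (length l)) p <= Rsum l (fun x => rpow (y x) p).
Proof.
  intros Hp Hl Hy. set (m := INR (length l)). assert (Hm : 0 < m) by (apply lt_0_INR; auto).
  set (c := Rsum l y / m).
  destruct (Rle_dec c 0).
  { rewrite rpow_nonpos, Rmult_0_r by auto. apply Rsum_nonneg; intros; apply rpow_ge0. }
  rewrite rpow_Rpower by lra.
  apply Rle_trans with (Rsum l (fun x => Rpower c p * (1 + p * (y x / c - 1)))).
  - rewrite Rsum_scal.
    rewrite (Rsum_ext _ _ (fun x => (1 - p) + (p / c) * y x)) by (intros; field; lra).
    rewrite Rsum_add, Rsum_scal, Rsum_const. fold m.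
    replace (Rsum l y) with (c * m) by (unfold c; field; lra).
    right. field. lra.
  - apply Rsum_le. intros x _. rewrite (rpow_scale c (y x) p) by (auto; lra).
    apply Rmult_le_compat_l; [apply Rlt_le, exp_pos|]. apply rpow_bernoulli; auto.
    apply Rmult_le_pos; auto. apply Rlt_le, Rinv_0_lt_compat; lra.
Qed.

Definition grid (n : nat) : list (nat * nat) := list_prod (seq 0 (S n)) (seq 0 (S n)).

Lemma length_grid n : INR (length (grid n)) = INR (S n) ^ 2.
Proof. unfold grid. rewrite length_prod, length_seq, mult_INR. ring. Qed.

Lemma grid_sum_Cmod_ge_coeff M n c k : (2 * M <= n)%nat -> (kinf k <= Z.of_nat M)%Z ->
  INR (S n) ^ 2 * Cmod (c k) <=
  Rsum (grid n) (fun ab => Cmod (trig_eval M c (grid_pt n (fst ab)) (grid_pt n (snd ab)))).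
Proof.
  intros Hn Hk. pose proof (f_equal Cmod (grid_sum2_fourier_coeff M n c k Hn Hk)) as FE.
  rewrite Cmod_scale, Rabs_pos_eq in FE by apply pow2_ge_0.
  rewrite <- FE. unfold grid, grid_sum2.
  rewrite (Rsum_list_prod _ _ (fun a b => Cmod (trig_eval M c (grid_pt n a) (grid_pt n b)))).
  eapply Rle_trans; [apply Cmod_Csum|]. apply Rsum_le. intros a _.
  eapply Rle_trans; [apply Cmod_Csum|]. right. apply Rsum_ext. intros b _.
  rewrite Cmod_mul, Cmod_Cexpi. ring.
Qed.

Lemma riemann_T2_rpow_ge_coeff M n c k p : 1 <= p -> (2 * M <= n)%nat ->
  (kinf k <= Z.of_nat M)%Z ->
  4 * PI ^ 2 * rpow (Cmod (c k)) p <= riemann_T2 (fun x1 x2 => rpow (Cmod (trig_eval M c x1 x2)) p) n.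
Proof.
  intros Hp Hn Hk. pose proof PI_RGT_0.
  assert (HSn : 0 < INR (S n)) by (apply lt_0_INR; lia).
  set (Y := fun ab : nat * nat => Cmod (trig_eval M c (grid_pt n (fst ab)) (grid_pt n (snd ab)))).
  assert (Havg : Cmod (c k) <= Rsum (grid n) Y / INR (S n) ^ 2).
  { pose proof (grid_sum_Cmod_ge_coeff M n c k Hn Hk).
    apply Rmult_le_reg_r with (INR (S n) ^ 2); [nra|]. unfold Rdiv.
    rewrite Rmult_assoc, Rinv_l, Rmult_1_r by nra. fold Y in H0. lra. }
  assert (HJ := rpow_jensen (grid n) Y p Hp).
  rewrite length_grid in HJ.
  specialize (HJ ltac:(unfold grid; rewrite length_prod, length_seq; simpl; lia) (fun _ => Cmod_ge0 _)).
  rewrite riemann_T2_nsum.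
  replace (nsum (fun a => nsum (fun b => rpow (Cmod (trig_eval M c (grid_pt n a) (grid_pt n b))) p) (S n)) (S n))
    with (Rsum (grid n) (fun ab => rpow (Y ab) p)).
  2:{ unfold grid, Y. rewrite (Rsum_list_prod _ _ (fun a b => rpow (Cmod (trig_eval M c (grid_pt n a) (grid_pt n b))) p)).
      rewrite Rsum_seq. apply nsum_ext. intros. now rewrite Rsum_seq. }
  replace (4 * PI ^ 2 * rpow (Cmod (c k)) p)
    with ((2 * PI / INR (S n)) ^ 2 * (INR (S n) ^ 2 * rpow (Cmod (c k)) p)) by (field; lra).
  apply Rmult_le_compat_l; [apply pow2_ge_0|]. eapply Rle_trans; [|apply HJ].
  apply Rmult_le_compat_l; [nra|]. apply rpow_le_compat; [lra|]. split; [apply Cmod_ge0|auto].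
Qed.

Lemma Cmod_coeff_le_Lp_norm M c p k : 1 <= p -> (kinf k <= Z.of_nat M)%Z ->
  Cmod (c k) <= Lp_norm p (trig_eval M c).
Proof.
  intros Hp Hk. apply rpow_root_ge; auto; [apply Cmod_ge0|].
  apply (Un_cv_ge_eventually _ _ _ (2 * M) (riemann_T2_cv _ (unif_cont_rpow_trig_eval M c p Hp))).
  intros n Hn. apply riemann_T2_rpow_ge_coeff; auto.
Qed.

(** * Energy of the spectral viscosity approximation *)

Definition Cnorm2 (z : Cx) : R := fst z * fst z + snd z * snd z.
Definition Cdot (z w : Cx) : R := fst z * fst w + snd z * snd w.

Lemma Cnorm2_Cmod z : Cnorm2 z = Cmod z ^ 2.
Proof. rewrite Cmod_sq. unfold Cnorm2; ring. Qed.

Lemma Cnorm2_ge0 z : 0 <= Cnorm2 z.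
Proof. unfold Cnorm2. nra. Qed.

(* For a mode orthogonal to its wave vector the pressure term does no work. *)
Lemma Cdot_rhs_div_free (u1 u2 A1 A2 p : Cx) (k1 k2 r : R) :
  Cadd (Cscale k1 u1) (Cscale k2 u2) = C0 ->
  Cdot u1 (Csub (Copp A1) (Cadd (Cmul Ci (Cscale k1 p)) (Cscale r u1))) +
  Cdot u2 (Csub (Copp A2) (Cadd (Cmul Ci (Cscale k2 p)) (Cscale r u2)))
  = - fst (Cadd (Cmul (Cconj u1) A1) (Cmul (Cconj u2) A2)) - r * (Cnorm2 u1 + Cnorm2 u2).
Proof.
  intros E. assert (E1 := f_equal fst E); assert (E2 := f_equal snd E).
  destruct u1 as [a b], u2 as [c d], p as [x y], A1 as [a1 b1], A2 as [a2 b2].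
  unfold Cdot, Cnorm2, Csub, Cadd, Copp, Cmul, Ci, Cscale, Cconj, C0 in *; cbn [fst snd] in *.
  apply Rminus_diag_uniq.
  transitivity (y * (k1 * a + k2 * c) - x * (k1 * b + k2 * d)); [ring|]. rewrite E1, E2. ring.
Qed.

Section EnergyFlux.
Variables (N : nat) (v : VField).
Hypothesis Hsupp : forall l, (kinf l > Z.of_nat N)%Z -> v l = (C0, C0).
Hypothesis Hdiv : divfree v.
Hypothesis Hreal : forall k, v (kneg k) = (Cconj (fst (v k)), Cconj (snd (v k))).

Lemma Cconj_vel k : Cconj (fst (v k)) = fst (v (kneg k)) /\ Cconj (snd (v k)) = snd (v (kneg k)).
Proof.
  pose proof (Hreal (kneg k)) as H.
  replace (kneg (kneg k)) with k in H by (destruct k; unfold kneg; simpl; f_equal; lia).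
  rewrite H. simpl. destruct (v (kneg k)) as [[a b] [c d]]. unfold Cconj; simpl. split; f_equal; ring.
Qed.

(* The contribution of the interacting modes [j] and [k - j] to the energy flux into mode [-k]. *)
Definition triad (j k : Z2) : Cx :=
  Cmul (adv v j (ksub k j)) (Cadd (Cmul (fst (v (ksub k j))) (fst (v (kneg k))))
                                  (Cmul (snd (v (ksub k j))) (snd (v (kneg k))))).

Definition energy_flux : Cx := Csum (box N) (fun k =>
  Cadd (Cmul (Cconj (fst (v k))) (fst (NLu N v k))) (Cmul (Cconj (snd (v k))) (snd (NLu N v k)))).

(* [k |-> j - k] swaps the roles of [k - j] and [-k]; divergence-freeness of [v j] flips the sign. *)
Lemma triad_antisym j k : triad j (ksub j k) = Copp (triad j k).
Proof.
  unfold triad.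
  replace (ksub (ksub j k) j) with (kneg k) by (destruct j, k; unfold ksub, kneg; simpl; f_equal; lia).
  replace (kneg (ksub j k)) with (ksub k j) by (destruct j, k; unfold ksub, kneg; simpl; f_equal; lia).
  assert (A : adv v j (kneg k) = Copp (adv v j (ksub k j))).
  { pose proof (Hdiv j) as D. unfold adv.
    destruct j as [j1 j2], k as [k1 k2]; unfold kneg, ksub; cbn [fst snd] in *.
    rewrite !minus_IZR, !opp_IZR. revert D.
    destruct (v (j1, j2)) as [[a b] [c d]]; unfold Cadd, Cscale, Cmul, Copp, Ci, C0; cbn [fst snd].
    intros D. assert (E1 := f_equal fst D); assert (E2 := f_equal snd D); cbn [fst snd] in E1, E2.
    f_equal; apply Rminus_diag_uniq.
    - transitivity (IZR j1 * b + IZR j2 * d); [ring|]. rewrite E2. ring.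
    - transitivity (- (IZR j1 * a + IZR j2 * c)); [ring|]. rewrite E1. ring. }
  rewrite A. cx_ring.
Qed.

Lemma kinf_le_of_vel_nonzero l : v l <> (C0, C0) -> (kinf l <= Z.of_nat N)%Z.
Proof.
  intros H. destruct (Z_le_gt_dec (kinf l) (Z.of_nat N)) as [|Hl]; auto.
  exfalso; apply H, Hsupp, Hl.
Qed.

Lemma triad_nonzero j k : triad j k <> C0 -> (kinf k <= Z.of_nat N)%Z /\
  (kinf (ksub k j) <= Z.of_nat N)%Z.
Proof.
  unfold triad. intros H.
  assert (H' : Cadd (Cmul (fst (v (ksub k j))) (fst (v (kneg k))))
                    (Cmul (snd (v (ksub k j))) (snd (v (kneg k)))) <> C0)
    by (intros E; apply H; rewrite E; apply Cmul_0_r).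
  rewrite <- kinf_kneg. split; apply kinf_le_of_vel_nonzero; intros E; apply H'; rewrite E; cx_ring.
Qed.

Lemma energy_flux_zero : energy_flux = C0.
Proof.
  assert (E1 : energy_flux = Csum (box N) (fun j => Csum (box N) (fun k => triad j k))).
  { unfold energy_flux. rewrite <- Csum_swap. apply Csum_ext. intros k _.
    destruct (Cconj_vel k) as [c1 c2]. rewrite c1, c2. unfold NLu; cbn [fst snd].
    rewrite !Csum_mul_l, <- Csum_add. apply Csum_ext. intros j _. unfold triad. cx_ring. }
  (* enlarge the inner range so that it is invariant under [k |-> j - k] *)
  assert (E2 : energy_flux = Csum (box N) (fun j => Csum (box (2 * N)) (fun k => triad j k))).
  { rewrite E1. apply Csum_ext. intros j _. apply Csum_support; try apply NoDup_box.
    intros k Hk. destruct (triad_nonzero j k Hk) as [H1 _]. rewrite !In_box. lia. }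
  assert (E3 : energy_flux = Copp energy_flux).
  { rewrite E2 at 1. rewrite E2, <- Csum_opp. apply Csum_ext. intros j Hj.
    rewrite <- Csum_opp. apply In_box in Hj.
    rewrite <- (Csum_involution _ (ksub j) (fun k => triad j k)).
    - apply Csum_ext. intros k _. apply triad_antisym.
    - apply NoDup_box.
    - intros k. destruct j, k; unfold ksub; simpl; f_equal; lia.
    - intros k Hk. destruct (triad_nonzero j k Hk) as [H1 _]. rewrite In_box. lia.
    - intros k Hk. destruct (triad_nonzero j _ Hk) as [H1 _].
      rewrite In_box. destruct j, k; unfold kinf, ksub in *; simpl in *. lia. }
  destruct energy_flux as [a b]. unfold Copp in E3. inversion E3. unfold C0. f_equal; lra.
Qed.

End EnergyFlux.

Lemma Cnorm2_deriv z t d : Cderiv z t d ->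
  derivable_pt_lim (fun s => Cnorm2 (z s)) t (2 * Cdot (z t) d).
Proof.
  intros [H1 H2]. unfold Cnorm2, Cdot.
  replace (2 * (fst (z t) * fst d + snd (z t) * snd d)) with
    (fst d * fst (z t) + fst (z t) * fst d + (snd d * snd (z t) + snd (z t) * snd d)) by ring.
  apply derivable_pt_lim_plus; apply derivable_pt_lim_mult; auto.
Qed.

Lemma Rsum_deriv {A} (l : list A) (f : A -> R -> R) (f' : A -> R) t :
  (forall x, In x l -> derivable_pt_lim (f x) t (f' x)) ->
  derivable_pt_lim (fun s => Rsum l (fun x => f x s)) t (Rsum l f').
Proof.
  induction l; simpl; intros H.
  - apply (derivable_pt_lim_const 0).
  - apply (derivable_pt_lim_plus (f a) (fun s => Rsum l (fun x => f x s))); auto.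
Qed.

Lemma Cright_cont0_components z : Cright_cont0 z ->
  limit1_in (fun s => fst (z s)) (fun s => 0 <= s) (fst (z 0)) 0 /\
  limit1_in (fun s => snd (z s)) (fun s => 0 <= s) (snd (z 0)) 0.
Proof.
  intros H. split; intros e He; destruct (H e He) as [d [Hd Hz]]; exists d; split; auto;
    intros s [Hs Hsd]; simpl in *; unfold R_dist in *;
    rewrite Rminus_0_r, Rabs_pos_eq in Hsd by lra;
    eapply Rle_lt_trans; try apply (Hz s); try lra.
  - apply (Cmod_fst (Csub (z s) (z 0))).
  - apply (Cmod_snd (Csub (z s) (z 0))).
Qed.

Lemma Cright_cont0_Cnorm2 z : Cright_cont0 z ->
  limit1_in (fun s => Cnorm2 (z s)) (fun s => 0 <= s) (Cnorm2 (z 0)) 0.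
Proof.
  intros H. destruct (Cright_cont0_components z H).
  unfold Cnorm2. apply limit_plus; now apply limit_mul.
Qed.

Lemma limit1_in_Rsum {A} (l : list A) (f : A -> R -> R) D x0 :
  (forall x, In x l -> limit1_in (f x) D (f x x0) x0) ->
  limit1_in (fun s => Rsum l (fun x => f x s)) D (Rsum l (fun x => f x x0)) x0.
Proof.
  induction l; simpl; intros H.
  - exact (limit_free (fun _ => 0) D 0 x0).
  - apply (limit_plus (f a) (fun s => Rsum l (fun x => f x s))); auto.
Qed.

Section Energy.
Variables (N : nat) (u : R -> VField) (ph : R -> Z2 -> Cx) (r : Z2 -> R).
Hypothesis Hsupp : forall t k, 0 <= t -> (kinf k > Z.of_nat N)%Z -> u t k = (C0, C0).
Hypothesis Hdiv : forall t k, 0 <= t ->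
  Cadd (Cscale (IZR (fst k)) (fst (u t k))) (Cscale (IZR (snd k)) (snd (u t k))) = C0.
Hypothesis Hreal : forall t k, 0 <= t -> u t (kneg k) = (Cconj (fst (u t k)), Cconj (snd (u t k))).
Hypothesis Hcont0 : forall k, Cright_cont0 (fun s => fst (u s k)) /\ Cright_cont0 (fun s => snd (u s k)).
Hypothesis Hode : forall t k, 0 < t -> (kinf k <= Z.of_nat N)%Z ->
  Cderiv (fun s => fst (u s k)) t
    (Csub (Copp (fst (NLu N (u t) k)))
      (Cadd (Cmul Ci (Cscale (IZR (fst k)) (ph t k))) (Cscale (r k) (fst (u t k))))) /\
  Cderiv (fun s => snd (u s k)) t
    (Csub (Copp (snd (NLu N (u t) k)))
      (Cadd (Cmul Ci (Cscale (IZR (snd k)) (ph t k))) (Cscale (r k) (snd (u t k))))).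
Hypothesis Hr : forall k, 0 <= r k.

Definition energy (t : R) : R := Rsum (box N) (fun k => Cnorm2 (fst (u t k)) + Cnorm2 (snd (u t k))).

Definition energy_rate (t : R) : R := Rsum (box N) (fun k =>
  2 * Cdot (fst (u t k)) (Csub (Copp (fst (NLu N (u t) k)))
        (Cadd (Cmul Ci (Cscale (IZR (fst k)) (ph t k))) (Cscale (r k) (fst (u t k))))) +
  2 * Cdot (snd (u t k)) (Csub (Copp (snd (NLu N (u t) k)))
        (Cadd (Cmul Ci (Cscale (IZR (snd k)) (ph t k))) (Cscale (r k) (snd (u t k)))))).

Lemma energy_deriv t : 0 < t -> derivable_pt_lim energy t (energy_rate t).
Proof.
  intros Ht. apply (Rsum_deriv (box N) (fun k s => Cnorm2 (fst (u s k)) + Cnorm2 (snd (u s k)))).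
  intros k Hk. apply In_box in Hk. destruct (Hode t k Ht Hk) as [D1 D2].
  apply (derivable_pt_lim_plus (fun s => Cnorm2 (fst (u s k))) (fun s => Cnorm2 (snd (u s k))));
    now apply (Cnorm2_deriv (fun s => _ (u s k))).
Qed.

Lemma energy_rate_le0 t : 0 < t -> energy_rate t <= 0.
Proof.
  intros Ht. unfold energy_rate.
  set (F := fun k => fst (Cadd (Cmul (Cconj (fst (u t k))) (fst (NLu N (u t) k)))
                                (Cmul (Cconj (snd (u t k))) (snd (NLu N (u t) k))))).
  set (G := fun k => r k * (Cnorm2 (fst (u t k)) + Cnorm2 (snd (u t k)))).
  rewrite (Rsum_ext _ _ (fun k => (-2) * F k + (-2) * G k)).
  2:{ intros k _. rewrite <- Rmult_plus_distr_l, Cdot_rhs_div_free by (apply Hdiv; lra).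
      unfold F, G. ring. }
  rewrite Rsum_add, !Rsum_scal.
  assert (F0 : Rsum (box N) F = 0).
  { pose proof (energy_flux_zero N (u t) (fun k => Hsupp t k ltac:(lra))
                  (fun k => Hdiv t k ltac:(lra)) (fun k => Hreal t k ltac:(lra))) as T0.
    apply (f_equal fst) in T0. unfold energy_flux in T0. now rewrite fst_Csum in T0. }
  assert (0 <= Rsum (box N) G).
  { apply Rsum_nonneg. intros k _. apply Rmult_le_pos; auto.
    pose proof (Cnorm2_ge0 (fst (u t k))); pose proof (Cnorm2_ge0 (snd (u t k))). lra. }
  lra.
Qed.

Lemma energy_nonincreasing s t : 0 < s -> s <= t -> energy t <= energy s.
Proof.
  intros Hs0 Hst. destruct (Req_dec s t) as [->|]; [lra|].
  destruct (MVT_cor2 energy energy_rate s t) as [c [E Hc]]; [lra|intros; apply energy_deriv; lra|].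
  pose proof (energy_rate_le0 c ltac:(lra)). nra.
Qed.

Lemma energy_right_cont0 : limit1_in energy (fun s => 0 <= s) (energy 0) 0.
Proof.
  apply (limit1_in_Rsum (box N) (fun k s => Cnorm2 (fst (u s k)) + Cnorm2 (snd (u s k)))).
  intros k _. destruct (Hcont0 k) as [C1 C2].
  apply limit_plus; now apply (Cright_cont0_Cnorm2 (fun s => _ (u s k))).
Qed.

Lemma energy_le_initial t : 0 <= t -> energy t <= energy 0.
Proof.
  intros Ht. destruct (Rle_dec (energy t) (energy 0)) as [|Hgt]; auto. exfalso.
  destruct (energy_right_cont0 (energy t - energy 0)) as [d [Hd Hdd]]; [lra|].
  set (s := Rmin (d / 2) t).
  assert (0 < s) by (apply Rmin_pos; [lra|]; destruct (Req_dec t 0) as [->|]; lra).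
  assert (s <= t) by apply Rmin_r. assert (s <= d / 2) by apply Rmin_l.
  specialize (Hdd s). simpl in Hdd. unfold R_dist in Hdd.
  rewrite Rminus_0_r, Rabs_pos_eq in Hdd by lra.
  specialize (Hdd ltac:(split; lra)). apply Rabs_def2 in Hdd.
  pose proof (energy_nonincreasing s t ltac:(lra) ltac:(lra)). lra.
Qed.

End Energy.

Lemma high_nl_constant_le n : 1 <= n ->
  (4 * n + 1) ^ 2 * ((2 * n + 1) ^ 2 * (2 * n)) <= 450 * n ^ 5.
Proof.
  intros Hn.
  assert (0 <= (4 * n + 1) ^ 2 <= 25 * n ^ 2) by (split; nra).
  assert (0 <= (2 * n + 1) ^ 2 <= 9 * n ^ 2) by (split; nra).
  replace (450 * n ^ 5) with ((25 * n ^ 2) * ((9 * n ^ 2) * (2 * n))) by ring.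
  apply Rmult_le_compat; nra.
Qed.

(* Spectral decay with [sigma = 7] absorbs the [O(N^5)] combinatorial factor with room to spare. *)
Lemma Lp_norm_high_nl_le N v W Cs p : (1 <= N)%nat -> 1 <= p -> 0 <= Cs ->
  (forall l, (kinf l > Z.of_nat N)%Z \/ l = k0 -> v l = (C0, C0)) -> divfree v ->
  (forall l, Cmod (omhat v l) <= W) ->
  (forall l, knorm l >= INR N / 2 -> Cmod (omhat v l) <= Cs * / INR N ^ 7) ->
  Lp_norm p (high_nl_fun N v) <= 4 * PI ^ 2 * (450 * Cs * W) * / INR N ^ 2.
Proof.
  intros HN Hp HCs Hsupp Hdiv HW HD.
  assert (Hn : 1 <= INR N) by (apply (le_INR 1); auto).
  assert (Hn7 : 0 < INR N ^ 7) by (apply pow_lt; lra).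
  assert (HD0 : 0 <= Cs * / INR N ^ 7) by (apply Rmult_le_pos; [lra|apply Rlt_le, Rinv_0_lt_compat; lra]).
  pose proof (HW k0) as HW0. pose proof (Cmod_ge0 (omhat v k0)).
  pose proof (high_nl_constant_le (INR N) Hn) as Hc.
  eapply Rle_trans.
  - apply (Lp_norm_trig_eval_le _ _ _
      ((4 * INR N + 1) ^ 2 * ((2 * INR N + 1) ^ 2 * (2 * INR N * (W * (Cs * / INR N ^ 7))))) Hp);
      [|apply (Cmod_high_nl_fun_le N v W _ Hsupp Hdiv HW HD HD0)].
    pose proof (pos_INR N). apply Rmult_le_pos; [nra|]. apply Rmult_le_pos; [nra|].
    apply Rmult_le_pos; [lra|]. apply Rmult_le_pos; lra.
  - replace (4 * PI ^ 2 * (450 * Cs * W) * / INR N ^ 2)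
      with (4 * PI ^ 2 * (450 * INR N ^ 5 * (W * Cs) * / INR N ^ 7)) by (field; lra).
    apply Rmult_le_compat_l; [pose proof fourPI2_gt1; lra|].
    replace ((4 * INR N + 1) ^ 2 * ((2 * INR N + 1) ^ 2 * (2 * INR N * (W * (Cs * / INR N ^ 7)))))
      with (((4 * INR N + 1) ^ 2 * ((2 * INR N + 1) ^ 2 * (2 * INR N))) * (W * Cs) * / INR N ^ 7)
      by ring.
    apply Rmult_le_compat_r; [apply Rlt_le, Rinv_0_lt_compat; lra|].
    apply Rmult_le_compat_r; nra.
Qed.

Lemma Cmod_omhat_le_Lp_norm_vort N v p l : 1 <= p ->
  (forall l, (kinf l > Z.of_nat N)%Z -> v l = (C0, C0)) ->
  Cmod (omhat v l) <= Lp_norm p (vort_fun N v).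
Proof.
  intros Hp Hsupp. destruct (Z_le_gt_dec (kinf l) (Z.of_nat N)) as [Hl|Hl].
  - now apply Cmod_coeff_le_Lp_norm.
  - rewrite (omhat_zero v l (Hsupp l Hl)), Cmod_C0. apply rpow_ge0.
Qed.

Lemma Cmod_omhat_le_energy N v E l : 0 <= E ->
  (forall l, (kinf l > Z.of_nat N)%Z -> v l = (C0, C0)) ->
  Rsum (box N) (fun k => Cnorm2 (fst (v k)) + Cnorm2 (snd (v k))) <= E ^ 2 ->
  Cmod (omhat v l) <= 2 * INR N * E.
Proof.
  intros HE Hsupp Hen. pose proof (pos_INR N).
  destruct (Z_le_gt_dec (kinf l) (Z.of_nat N)) as [Hl|Hl].
  2:{ rewrite (omhat_zero v l (Hsupp l Hl)), Cmod_C0. nra. }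
  assert (Hu : Cnorm2 (fst (v l)) + Cnorm2 (snd (v l)) <= E ^ 2).
  { eapply Rle_trans; [|apply Hen].
    apply (Rsum_term_le _ (fun k => Cnorm2 (fst (v k)) + Cnorm2 (snd (v k)))); [|now apply In_box].
    intros; pose proof (Cnorm2_ge0 (fst (v x))); pose proof (Cnorm2_ge0 (snd (v x))); lra. }
  rewrite !Cnorm2_Cmod in Hu.
  pose proof (Cmod_ge0 (fst (v l))); pose proof (Cmod_ge0 (snd (v l))).
  assert (Cmod (fst (v l)) <= E) by (apply Rsqr_incr_0_var; unfold Rsqr; nra).
  assert (Cmod (snd (v l)) <= E) by (apply Rsqr_incr_0_var; unfold Rsqr; nra).
  assert (HlN : IZR (kinf l) <= INR N) by (rewrite INR_IZR_INZ; now apply IZR_le).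
  pose proof (Rabs_fst_le_kinf l); pose proof (Rabs_snd_le_kinf l).
  pose proof (Rabs_pos (IZR (fst l))); pose proof (Rabs_pos (IZR (snd l))).
  unfold omhat. rewrite Cmod_Ci_mul. eapply Rle_trans; [apply Cmod_sub|]. rewrite !Cmod_scale.
  nra.
Qed.

Lemma energy_filtered_le N (K : Z2 -> Cx) (u0 : VField) : (forall k, Cmod (K k) <= 1) ->
  Rsum (box N) (fun k => Cnorm2 (Cmul (K k) (fst (u0 k))) + Cnorm2 (Cmul (K k) (snd (u0 k)))) <=
  Rsum (box N) (fun k => Cmod (fst (u0 k)) ^ 2 + Cmod (snd (u0 k)) ^ 2).
Proof.
  intros HK. apply Rsum_le. intros k _. rewrite !Cnorm2_Cmod, !Cmod_mul.
  pose proof (HK k). pose proof (Cmod_ge0 (K k)).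
  pose proof (Cmod_ge0 (fst (u0 k))). pose proof (Cmod_ge0 (snd (u0 k))).
  assert (Cmod (K k) ^ 2 <= 1) by nra.
  rewrite !Rpow_mult_distr.
  pose proof (pow2_ge_0 (Cmod (fst (u0 k)))); pose proof (pow2_ge_0 (Cmod (snd (u0 k)))).
  apply Rplus_le_compat; [rewrite <- (Rmult_1_l (Cmod (fst (u0 k)) ^ 2)) at 2
    |rewrite <- (Rmult_1_l (Cmod (snd (u0 k)) ^ 2)) at 2]; apply Rmult_le_compat_r; lra.
Qed.

Lemma Rpower_INR_opp_7 N : (1 <= N)%nat -> Rpower (INR N) (Ropp 7) = / INR N ^ 7.
Proof.
  intros HN. assert (1 <= INR N) by (apply (le_INR 1); lia).
  rewrite Rpower_Ropp, <- (Rpower_pow 7) by lra. f_equal. f_equal. simpl. ring.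
Qed.

Lemma Rmult_inv_pow2_le n A W : 1 <= n -> 0 <= A -> 0 <= W -> A * W * / n ^ 2 <= A * / n * W.
Proof.
  intros Hn HA HW. replace (A * W * / n ^ 2) with (A * / n * W * / n) by (field; lra).
  assert (/ n <= 1) by (rewrite <- Rinv_1; apply Rinv_le_contravar; lra).
  assert (0 <= A * / n * W) by (apply Rmult_le_pos; [apply Rmult_le_pos; [|apply Rlt_le, Rinv_0_lt_compat]|]; lra).
  nra.
Qed.

Theorem mainTheorem7
  (u0 : VField)
  (Hu0_real : forall k, u0 (kneg k) = (Cconj (fst (u0 k)), Cconj (snd (u0 k))))
  (Hu0_L2 : exists B, forall M, Rsum (box M) (fun k =>
              Cmod (fst (u0 k)) ^ 2 + Cmod (snd (u0 k)) ^ 2) <= B)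
  (Hu0_div : forall k, Cadd (Cscale (IZR (fst k)) (fst (u0 k)))
                            (Cscale (IZR (snd k)) (snd (u0 k))) = C0)
  (Hu0_mean : u0 k0 = (C0, C0))
  (eps : nat -> R) (m a : nat -> nat)
  (Rhat : nat -> Z2 -> R) (Khat : nat -> Z2 -> Cx) (CRK : R)
  (Heps : forall N, (2 <= N)%nat -> eps N > 0)
  (Ha : forall N, (2 <= N)%nat -> (1 <= a N <= N)%nat)
  (HR01 : forall N k, (2 <= N)%nat -> 0 <= Rhat N k <= 1)
  (HR1 : forall N k, (2 <= N)%nat -> knorm k <= INR (m N) -> Rhat N k = 1)
  (HR0 : forall N k, (2 <= N)%nat -> knorm k > 2 * INR (m N) -> Rhat N k = 0)
  (HRL1 : forall N, (2 <= N)%nat ->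
     Lp_norm 1 (trig_eval (2 * m N) (fun k => (Rhat N k / (4 * PI ^ 2), 0)))
       <= CRK * ln (INR N) ^ 2)
  (HK0 : forall N k, (2 <= N)%nat -> (kinf k > Z.of_nat (a N))%Z -> Khat N k = C0)
  (HK1 : forall N k, (2 <= N)%nat -> Cmod (Khat N k) <= 1)
  (HKreal : forall N k, (2 <= N)%nat -> Khat N (kneg k) = Cconj (Khat N k))
  (HKL1 : forall N, (2 <= N)%nat ->
     Lp_norm 1 (trig_eval (a N) (fun k => Cscale (/ (4 * PI ^ 2)) (Khat N k)))
       <= CRK * ln (INR N) ^ 2)
  (uhat : nat -> R -> VField) (phat : nat -> R -> Z2 -> Cx)
  (Hsupp : forall N t k, (2 <= N)%nat -> 0 <= t ->
     ((kinf k > Z.of_nat N)%Z \/ k = k0) -> uhat N t k = (C0, C0))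
  (Hdiv : forall N t k, (2 <= N)%nat -> 0 <= t ->
     Cadd (Cscale (IZR (fst k)) (fst (uhat N t k)))
          (Cscale (IZR (snd k)) (snd (uhat N t k))) = C0)
  (Hreal : forall N t k, (2 <= N)%nat -> 0 <= t ->
     uhat N t (kneg k) = (Cconj (fst (uhat N t k)), Cconj (snd (uhat N t k))))
  (Hinit : forall N k, (2 <= N)%nat ->
     uhat N 0 k = (Cmul (Khat N k) (fst (u0 k)), Cmul (Khat N k) (snd (u0 k))))
  (Hcont0 : forall N k, (2 <= N)%nat ->
     Cright_cont0 (fun s => fst (uhat N s k)) /\
     Cright_cont0 (fun s => snd (uhat N s k)))
  (Hode : forall N t k, (2 <= N)%nat -> 0 < t -> (kinf k <= Z.of_nat N)%Z ->
     Cderiv (fun s => fst (uhat N s k)) t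
       (Csub (Copp (fst (NLu N (uhat N t) k)))
         (Cadd (Cmul Ci (Cscale (IZR (fst k)) (phat N t k)))
               (Cscale (eps N * knorm2 k * (1 - Rhat N k)) (fst (uhat N t k))))) /\
     Cderiv (fun s => snd (uhat N s k)) t
       (Csub (Copp (snd (NLu N (uhat N t) k)))
         (Cadd (Cmul Ci (Cscale (IZR (snd k)) (phat N t k)))
               (Cscale (eps N * knorm2 k * (1 - Rhat N k)) (snd (uhat N t k))))))
  (nu : R) (Hnu : 0 <= nu <= 2) (tstar : nat -> R)
  (Heps_lim : Un_cv eps 0)
  (Hepsm_lim : Un_cv (fun N => eps N * INR (m N) ^ 2 * ln (INR N) ^ 2) 0)
  (Htstar_pos : forall N, (2 <= N)%nat -> tstar N > 0)
  (Htstar_lim : Un_cv (fun N => tstar N * Rpower (INR (a N)) (nu / 2)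
                                 * INR N * ln (INR N) ^ 2) 0)
  (Hdecay : forall sigma, sigma > 0 -> exists Cs, forall N t k, (2 <= N)%nat ->
     tstar N <= t -> knorm k >= INR N / 2 ->
     Cmod (omhat (uhat N t) k) <= Cs * Rpower (INR N) (- sigma)) :
  exists C C', C > 0 /\ C' > 0 /\
    forall N t p, (2 <= N)%nat -> tstar N <= t -> 1 <= p ->
      Lp_norm p (high_nl_fun N (uhat N t))
        <= C * / INR N * Lp_norm p (vort_fun N (uhat N t)) /\
      Lp_norm p (high_nl_fun N (uhat N t)) <= C' * / INR N.
Proof.
  destruct (Hdecay 7 ltac:(lra)) as [Cs HCs].
  destruct Hu0_L2 as [B HB].
  set (Cs' := Rabs Cs + 1). set (B' := Rabs B + 1).
  assert (HCs' : 0 < Cs') by (pose proof (Rabs_pos Cs); unfold Cs'; lra).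
  assert (HB' : 0 < B' /\ B <= B' ^ 2) by (pose proof (Rle_abs B); pose proof (Rabs_pos B); unfold B'; split; nra).
  pose proof fourPI2_gt1.
  exists (4 * PI ^ 2 * (450 * Cs')), (4 * PI ^ 2 * (450 * Cs' * (2 * B'))).
  split; [|split]; [apply Rmult_lt_0_compat; lra|apply Rmult_lt_0_compat; [|apply Rmult_lt_0_compat]; lra|].
  intros N t p HN Ht Hp.
  assert (Ht0 : 0 < t) by (pose proof (Htstar_pos N HN); lra).
  assert (Hsupp' : forall l, (kinf l > Z.of_nat N)%Z -> uhat N t l = (C0, C0)) by (intros; apply Hsupp; auto; lra).
  assert (Hhigh : forall W, (forall l, Cmod (omhat (uhat N t) l) <= W) ->
            Lp_norm p (high_nl_fun N (uhat N t)) <= 4 * PI ^ 2 * (450 * Cs' * W) * / INR N ^ 2).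
  { intros W HW. apply Lp_norm_high_nl_le; auto; [lia|lra|intros; apply Hsupp; auto; lra|..].
    - intros k. apply Hdiv; auto; lra.
    - intros l Hl. rewrite <- Rpower_INR_opp_7 by lia. eapply Rle_trans; [apply (HCs N t l HN Ht Hl)|].
      apply Rmult_le_compat_r; [apply Rlt_le, exp_pos|]. pose proof (Rle_abs Cs). unfold Cs'; lra. }
  split.
  - eapply Rle_trans; [apply Hhigh; intros; now apply (Cmod_omhat_le_Lp_norm_vort N _ p)|].
    rewrite <- Rmult_assoc. apply Rmult_inv_pow2_le; [apply (le_INR 1); lia|nra|apply rpow_ge0].
  - assert (Hen : energy N (uhat N) t <= B' ^ 2).
    { eapply Rle_trans;
        [apply (energy_le_initial N (uhat N) (phat N) (fun k => eps N * knorm2 k * (1 - Rhat N k)));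
         auto; try lra|].
      - intros k. pose proof (Heps N HN); pose proof (HR01 N k HN); pose proof (knorm2_ge0 k).
        apply Rmult_le_pos; [apply Rmult_le_pos|]; lra.
      - unfold energy. rewrite (Rsum_ext _ _ _ (fun k _ => f_equal
            (fun w => Cnorm2 (fst w) + Cnorm2 (snd w)) (Hinit N k HN))). cbn [fst snd].
        eapply Rle_trans; [apply energy_filtered_le; auto|]. pose proof (HB N). lra. }
    eapply Rle_trans; [apply Hhigh; intros; apply (Cmod_omhat_le_energy N _ B'); auto; lra|].
    right. field. apply not_0_INR. lia.
Qed.
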